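(* Let $P$ be an orthogonal polygon with $n$ corners. Then $P$ can be divided into at most $\frac{3}{4}n-2$ rectangular pieces by adding only vertical line segments to the interior of $P$. If $P$ is a polyomino, the rectangular pieces can be chosen to be polyominos as well.
   Context: An orthogonal polygon is a polygonal region, possibly with holes, all of whose edges are axis-parallel. A cell is a unit square $[i,i+1]\times[j,j+1]$ with $i,j\in\mathbb{Z}$. A polyomino is a finite union of cells. *)

From Stdlib Require Import Reals Lra List ZArith.
Open Scope R_scope.

Definition point := (R * R)%type.

(* ---- Local models of a closed orthogonal region near a point p. ----
   They are predicates on the displacement (u, v) = q - p. *)
Definition model_full (u v : R) : Prop := True.
Definition model_empty (u v : R) : Prop := False.
Definition model_halfx (s : bool) (u v : R) : Prop := if s then 0 <= u else u <= 0.
Definition model_halfy (s : bool) (u v : R) : Prop := if s then 0 <= v else v <= 0.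
Definition model_quadrant (s t : bool) (u v : R) : Prop :=
  (if s then 0 <= u else u <= 0) /\ (if t then 0 <= v else v <= 0).
Definition model_threequad (s t : bool) (u v : R) : Prop :=
  ~ ((if s then 0 < u else u < 0) /\ (if t then 0 < v else v < 0)).

Definition locally_like (P : point -> Prop) (p : point) (M : R -> R -> Prop) : Prop :=
  exists eps, 0 < eps /\
    forall q : point, Rabs (fst q - fst p) < eps -> Rabs (snd q - snd p) < eps ->
      (P q <-> M (fst q - fst p) (snd q - snd p)).

Definition interior_pt (P : point -> Prop) (p : point) : Prop :=
  locally_like P p model_full.

Definition boundary_pt (P : point -> Prop) (p : point) : Prop :=
  P p /\ ~ interior_pt P p.

Definition corner (P : point -> Prop) (p : point) : Prop :=
  exists s t, locally_like P p (model_quadrant s t) \/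
              locally_like P p (model_threequad s t).

(* This is
   exactly a polygonal region with holes whose boundary consists of pairwise
   disjoint simple closed axis-parallel polygonal curves. *)
Definition orthogonal_polygon (P : point -> Prop) : Prop :=
  (exists p, P p) /\
  (exists M, forall q, P q -> Rabs (fst q) <= M /\ Rabs (snd q) <= M) /\
  (forall p : point,
      locally_like P p model_full \/ locally_like P p model_empty \/
      (exists s, locally_like P p (model_halfx s)) \/
      (exists s, locally_like P p (model_halfy s)) \/
      (exists s t, locally_like P p (model_quadrant s t)) \/
      (exists s t, locally_like P p (model_threequad s t))) /\
  (forall p q : point, interior_pt P p -> interior_pt P q ->
     exists f g : R -> R, continuity f /\ continuity g /\
       f 0 = fst p /\ g 0 = snd p /\ f 1 = fst q /\ g 1 = snd q /\
       forall t, 0 <= t <= 1 -> interior_pt P (f t, g t)).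

Definition num_corners (P : point -> Prop) (n : nat) : Prop :=
  exists l : list point, NoDup l /\ (forall p, In p l <-> corner P p) /\ length l = n.

Definition rect := (R * R * R * R)%type.
Definition rect_wf (r : rect) : Prop :=
  let '(a, b, c, d) := r in a < b /\ c < d.
Definition in_rect (r : rect) (q : point) : Prop :=
  let '(a, b, c, d) := r in a <= fst q <= b /\ c <= snd q <= d.
Definition in_rect_open (r : rect) (q : point) : Prop :=
  let '(a, b, c, d) := r in a < fst q < b /\ c < snd q < d.

(* The pieces rs divide P into rectangles (nondegenerate, union P, pairwise
   disjoint interiors), and only vertical segments are added: every horizontal
   side of every piece lies on the boundary of P. *)
Definition vertical_rect_partition (P : point -> Prop) (rs : list rect) : Prop :=
  (forall r, In r rs -> rect_wf r) /\
  (forall q, P q <-> exists r, In r rs /\ in_rect r q) /\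
  (forall i j, (i < length rs)%nat -> (j < length rs)%nat -> i <> j ->
     forall q, ~ (in_rect_open (nth i rs (0,0,0,0)) q /\
                  in_rect_open (nth j rs (0,0,0,0)) q)) /\
  (forall r, In r rs ->
     let '(a, b, c, d) := r in
     forall x, a <= x <= b -> boundary_pt P (x, c) /\ boundary_pt P (x, d)).

Definition cell (i j : Z) (q : point) : Prop :=
  IZR i <= fst q <= IZR i + 1 /\ IZR j <= snd q <= IZR j + 1.
Definition polyomino (S : point -> Prop) : Prop :=
  exists cells : list (Z * Z),
    forall q, S q <-> exists ij, In ij cells /\ cell (fst ij) (snd ij) q.

(* Cut the plane by the vertical and horizontal lines through the corners of P.
   An open grid cell contains no boundary point, so it lies inside or outside P,
   and P is the union of the closed filled cells.  Around a grid vertex the four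
   cells follow the local shape of P, so no two diagonal cells alone are filled,
   and the vertices with one or three filled cells are corners: convex and reflex.

   Split every column of cells into maximal vertical runs and merge equal runs of
   consecutive columns into rectangles; their horizontal sides lie on the boundary.
   Between two adjacent columns, each run of one column that is not a run of the
   other is paid for twice by the vertices on that line, weighted 1 if convex and
   3 if reflex; this gives 4 r <= C + 3 R for r rectangles.  The extreme columns
   carry C >= 4, hence 4 r + 8 <= 3 (C + R) <= 3 n.  For a polyomino the corners
   are integral, hence so are the rectangles. *)

From Stdlib Require Import Reals Lra Lia List Sorted Bool ZArith ClassicalEpsilon Classical.
Import ListNotations.

Open Scope nat_scope.

(** * Maximal runs and the rectangles they form *)

Fixpoint nsum (n : nat) (f : nat -> nat) : nat :=
  match n with 0 => 0 | S n' => nsum n' f + f n' end.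

Lemma nsum_ext n f g : (forall i, i < n -> f i = g i) -> nsum n f = nsum n g.
Proof. induction n; simpl; intros; auto. rewrite IHn, H; auto. Qed.

Lemma nsum_le n f g : (forall i, i < n -> f i <= g i) -> nsum n f <= nsum n g.
Proof.
  induction n; simpl; intros H; auto.
  specialize (IHn (fun i h => H i ltac:(lia))). specialize (H n ltac:(lia)). lia.
Qed.

Lemma nsum_add n f g : nsum n (fun i => f i + g i) = nsum n f + nsum n g.
Proof. induction n; simpl; auto. rewrite IHn; lia. Qed.

Lemma nsum_scale n c f : nsum n (fun i => c * f i) = c * nsum n f.
Proof. induction n; simpl; auto. rewrite IHn; lia. Qed.

Lemma nsum_swap n m f :
  nsum n (fun i => nsum m (fun j => f i j)) = nsum m (fun j => nsum n (fun i => f i j)).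
Proof.
  induction n as [|n IHn]; simpl.
  - induction m; simpl; auto. rewrite <- IHm; auto.
  - rewrite IHn, <- nsum_add. reflexivity.
Qed.

Lemma nsum_zero n f : (forall i, i < n -> f i = 0) -> nsum n f = 0.
Proof. induction n; simpl; intros H; auto. rewrite IHn, H; auto. Qed.

Lemma nsum_ge1 n f i : i < n -> f i <= nsum n f.
Proof.
  induction n; intros; [lia|]. simpl.
  destruct (Nat.eq_dec i n); [subst; lia|]. specialize (IHn ltac:(lia)); lia.
Qed.

Lemma nsum_ge2 n f i1 i2 : i1 < n -> i2 < n -> i1 <> i2 -> f i1 + f i2 <= nsum n f.
Proof.
  induction n; intros; [lia|]. simpl.
  destruct (Nat.eq_dec i1 n), (Nat.eq_dec i2 n); subst; try lia.
  - pose proof (nsum_ge1 n f i2 ltac:(lia)); lia.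
  - pose proof (nsum_ge1 n f i1 ltac:(lia)); lia.
Qed.

Lemma nsum_indicator n s : s < n -> nsum n (fun a => Nat.b2n (a =? s)) = 1.
Proof.
  induction n; intros; [lia|]. simpl. destruct (Nat.eq_dec s n).
  - subst. rewrite Nat.eqb_refl, nsum_zero; auto.
    intros i hi. destruct (Nat.eqb_spec i n); auto; lia.
  - rewrite IHn by lia. destruct (Nat.eqb_spec n s); [lia|]. simpl; lia.
Qed.

Lemma length_filter_flat_map {B} (p : B -> bool) (g : nat -> list B) s n :
  length (filter p (flat_map g (seq s n))) = nsum n (fun k => length (filter p (g (s + k)))).
Proof.
  induction n; [reflexivity|].
  rewrite seq_S, flat_map_app, filter_app, length_app, IHn. simpl. rewrite app_nil_r. reflexivity.
Qed.

Lemma length_filter_map_seq {B} (p : B -> bool) (h : nat -> B) n :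
  length (filter p (map h (seq 0 n))) = nsum n (fun k => Nat.b2n (p (h k))).
Proof.
  induction n; [reflexivity|].
  rewrite seq_S, map_app, filter_app, length_app, IHn. simpl. destruct (p (h n)); simpl; lia.
Qed.

Lemma NoDup_flat_map {A B} (g : A -> list B) l :
  NoDup l -> (forall x, In x l -> NoDup (g x)) ->
  (forall x y z, In x l -> In y l -> In z (g x) -> In z (g y) -> x = y) -> NoDup (flat_map g l).
Proof.
  induction l; intros h1 h2 h3; simpl; [constructor|].
  inversion h1; subst. apply NoDup_app.
  - apply h2; simpl; auto.
  - apply IHl; auto.
    + intros x hx; apply h2; simpl; auto.
    + intros x y z hx hy; apply h3; simpl; auto.
  - intros z hz hz'. apply in_flat_map in hz'. destruct hz' as [y [hy hzy]].
    assert (a = y) by (apply (h3 a y z); simpl; auto). subst; tauto.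
Qed.

Lemma nsum_rises_falls (g : nat -> bool) n :
  nsum n (fun i => Nat.b2n (g (S i) && negb (g i))) + Nat.b2n (g 0) =
  nsum n (fun i => Nat.b2n (g i && negb (g (S i)))) + Nat.b2n (g n).
Proof. induction n; simpl; auto. destruct (g n), (g (S n)); simpl in *; lia. Qed.

Lemma least_witness (p : nat -> bool) :
  (exists n, p n = true) -> exists n, p n = true /\ forall m, m < n -> p m = false.
Proof.
  intros [n hn]. induction n as [n IH] using (well_founded_induction lt_wf).
  destruct (existsb p (seq 0 n)) eqn:E.
  - apply existsb_exists in E. destruct E as [m [hm1 hm2]]. apply in_seq in hm1. apply (IH m); auto; lia.
  - exists n; split; auto. intros m hm. destruct (p m) eqn:E2; auto.
    enough (existsb p (seq 0 n) = true) by congruence.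
    apply existsb_exists; exists m; split; auto; apply in_seq; lia.
Qed.

Lemma greatest_witness (p : nat -> bool) N :
  (exists n, p n = true) -> (forall k, N < k -> p k = false) ->
  exists n, p n = true /\ forall m, n < m -> p m = false.
Proof.
  intros hex hN.
  destruct (least_witness (fun k => p (N - k))) as [k [hk hmin]].
  { destruct hex as [n hn]. exists (N - n).
    destruct (le_lt_dec n N); [replace (N - (N - n)) with n by lia; auto|].
    rewrite hN in hn; [discriminate|lia]. }
  exists (N - k). split; auto. intros m hm.
  destruct (le_lt_dec m N); [|apply hN; lia].
  replace m with (N - (N - m)) by lia. apply hmin. lia.
Qed.

Definition maxrun (f : nat -> bool) (a b : nat) : bool :=
  (a <? b) && forallb f (seq (S a) (b - a)) && negb (f a) && negb (f (S b)).

Lemma maxrunP f a b : maxrun f a b = true <->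
  a < b /\ (forall k, a < k <= b -> f k = true) /\ f a = false /\ f (S b) = false.
Proof.
  unfold maxrun. rewrite !andb_true_iff, !negb_true_iff, Nat.ltb_lt, forallb_forall.
  split.
  - intros [[[h1 h2] h3] h4]; repeat split; auto. intros k hk; apply h2, in_seq; lia.
  - intros [h1 [h2 [h3 h4]]]; repeat split; auto. intros k hk; apply in_seq in hk; apply h2; lia.
Qed.

Fixpoint run_start (f : nat -> bool) (j : nat) : nat :=
  match j with 0 => 0 | S j' => if f j' then run_start f j' else j' end.

Lemma run_start_spec f j : f 0 = false -> f j = true ->
  run_start f j < j /\ f (run_start f j) = false /\
  forall k, run_start f j < k <= j -> f k = true.
Proof.
  intros h0; induction j; intros hj; [congruence|]. simpl.
  destruct (bool_dec (f j) true) as [E|E%not_true_is_false]; rewrite E.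
  - destruct (IHj E) as [a [b c]]. repeat split; try lia; auto. intros k hk.
    destruct (Nat.eq_dec k (S j)); subst; auto. apply c; lia.
  - repeat split; auto. intros k hk; replace k with (S j) by lia; auto.
Qed.

Lemma maxrun_run_start f a b : f 0 = false -> maxrun f a b = true -> a = run_start f b.
Proof.
  intros h0 hr. apply maxrunP in hr. destruct hr as [h1 [h2 [h3 h4]]].
  destruct (run_start_spec f b h0 (h2 b ltac:(lia))) as [s1 [s2 s3]].
  destruct (lt_eq_lt_dec a (run_start f b)) as [[h|h]|h]; auto.
  - rewrite h2 in s2; [congruence|lia].
  - rewrite s3 in h3; [congruence|lia].
Qed.

Lemma maxrun_start f b : f 0 = false -> f b = true -> f (S b) = false ->
  maxrun f (run_start f b) b = true.
Proof. intros h0 hb hb1. destruct (run_start_spec f b h0 hb). apply maxrunP; tauto. Qed.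

Lemma maxrun_unique f a b a' b' j : f 0 = false -> maxrun f a b = true -> maxrun f a' b' = true ->
  a < j <= b -> a' < j <= b' -> a = a' /\ b = b'.
Proof.
  intros h0 h1 h2 j1 j2.
  assert (b = b').
  { pose proof h1 as p; pose proof h2 as q. apply maxrunP in p, q.
    destruct p as [_ [p1 [_ p2]]], q as [_ [q1 [_ q2]]].
    destruct (lt_eq_lt_dec b b') as [[h|h]|h]; auto.
    - rewrite q1 in p2; [congruence|lia].
    - rewrite p1 in q2; [congruence|lia]. }
  subst b'. split; auto. rewrite (maxrun_run_start f a b), (maxrun_run_start f a' b); auto.
Qed.

Definition run_ends (f : nat -> bool) (b : nat) : bool := f b && negb (f (S b)).

Lemma maxrun_eq f a b : f 0 = false -> maxrun f a b = run_ends f b && (a =? run_start f b).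
Proof.
  intros h0. unfold run_ends. destruct (maxrun f a b) eqn:E.
  - pose proof (maxrun_run_start f a b h0 E) as ->.
    apply maxrunP in E. destruct E as [hab [hin [_ ->]]].
    rewrite hin, Nat.eqb_refl by lia. reflexivity.
  - destruct (f b) eqn:Eb, (f (S b)) eqn:Eb1; auto. simpl.
    destruct (Nat.eqb_spec a (run_start f b)) as [->|]; auto.
    rewrite maxrun_start in E; auto.
Qed.

Lemma nsum_maxrun f b N : f 0 = false -> (forall j, N < j -> f j = false) ->
  nsum (S N) (fun a => Nat.b2n (maxrun f a b)) = Nat.b2n (run_ends f b).
Proof.
  intros h0 hN. rewrite (nsum_ext _ _ (fun a => Nat.b2n (run_ends f b) * Nat.b2n (a =? run_start f b))).
  2: { intros a _. rewrite maxrun_eq by auto. destruct (run_ends f b), (a =? run_start f b); reflexivity. }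
  rewrite nsum_scale. destruct (run_ends f b) eqn:E; cbn [Nat.b2n]; [rewrite Nat.mul_1_l|lia].
  apply andb_true_iff in E as [Eb _].
  assert (b <= N) by (destruct (le_lt_dec b N); auto; rewrite hN in Eb; [discriminate|lia]).
  destruct (run_start_spec f b h0 Eb). rewrite nsum_indicator; lia.
Qed.

Section TwoColumns.
Variables L R : nat -> bool.
Variable N : nat.
Hypothesis L0 : L 0 = false.
Hypothesis R0 : R 0 = false.
Hypothesis LN : forall j, N < j -> L j = false.
Hypothesis RN : forall j, N < j -> R j = false.
Hypothesis no_diag1 : forall j, ~ (L j = true /\ R (S j) = true /\ R j = false /\ L (S j) = false).
Hypothesis no_diag2 : forall j, ~ (R j = true /\ L (S j) = true /\ L j = false /\ R (S j) = false).

Definition unmatched_runs (b : nat) : nat :=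
  nsum (S N) (fun a => Nat.b2n (xorb (maxrun L a b) (maxrun R a b))).

Lemma nsum_common_runs b :
  nsum (S N) (fun a => Nat.b2n (maxrun L a b && maxrun R a b)) =
  Nat.b2n (run_ends L b && run_ends R b && (run_start L b =? run_start R b)).
Proof.
  destruct (run_ends L b && run_ends R b && (run_start L b =? run_start R b)) eqn:E.
  - apply andb_true_iff in E as [E e%Nat.eqb_eq]. apply andb_true_iff in E as [EL ER].
    rewrite <- EL, <- (nsum_maxrun L b N) by auto. apply nsum_ext. intros a _.
    rewrite !maxrun_eq, e, EL, ER by auto. destruct (a =? _); reflexivity.
  - apply nsum_zero. intros a _. rewrite !maxrun_eq by auto.
    destruct (run_ends L b), (run_ends R b); simpl in E |- *; rewrite ?andb_false_r; auto.
    destruct (Nat.eqb_spec a (run_start L b)), (Nat.eqb_spec a (run_start R b)); auto.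
    apply Nat.eqb_neq in E. lia.
Qed.

Lemma unmatched_runs_eq b :
  unmatched_runs b + 2 * Nat.b2n (run_ends L b && run_ends R b && (run_start L b =? run_start R b)) =
  Nat.b2n (run_ends L b) + Nat.b2n (run_ends R b).
Proof.
  unfold unmatched_runs.
  rewrite <- nsum_common_runs, <- (nsum_maxrun L b N), <- (nsum_maxrun R b N) by auto.
  rewrite <- nsum_scale, <- !nsum_add. apply nsum_ext. intros a _.
  destruct (maxrun L a b), (maxrun R a b); reflexivity.
Qed.

(* Scanning the rows upward, every run end not shared by the other column
   costs 2, paid by the weights of the grid vertices between the columns;
   [potential h] is the credit carried by the runs crossing row h. *)
Definition potential (h : nat) : nat :=
  if L h && R h then (if run_start L h =? run_start R h then 0 else 4)
  else if L h || R h then 1 else 0.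

Definition vertex_weight (j : nat) : nat :=
  let c := Nat.b2n (L j) + Nat.b2n (R j) + Nat.b2n (L (S j)) + Nat.b2n (R (S j)) in
  Nat.b2n (c =? 1) + 3 * Nat.b2n (c =? 3).

Lemma potential_step h : 2 * unmatched_runs h + potential (S h) <= potential h + vertex_weight h.
Proof.
  pose proof (unmatched_runs_eq h) as HX. unfold potential, vertex_weight, run_ends in *. cbn [run_start].
  assert (HsL : L h = true -> run_start L h < h) by (intro E; apply (run_start_spec L h L0 E)).
  assert (HsR : R h = true -> run_start R h < h) by (intro E; apply (run_start_spec R h R0 E)).
  pose proof (no_diag1 h). pose proof (no_diag2 h).
  destruct (L h), (R h), (L (S h)), (R (S h));
    try specialize (HsL eq_refl); try specialize (HsR eq_refl); simpl in *;
    try (exfalso; tauto);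
    repeat match goal with |- context[?a =? ?b] => destruct (Nat.eqb_spec a b) end;
    repeat match goal with H : context[?a =? ?b] |- _ => destruct (Nat.eqb_spec a b) end;
    simpl in *; lia.
Qed.

Lemma two_columns_bound :
  2 * nsum (S N) (fun a => nsum (S N) (fun b => Nat.b2n (xorb (maxrun L a b) (maxrun R a b))))
  <= nsum (S N) vertex_weight.
Proof.
  rewrite nsum_swap.
  assert (scan : forall h, 2 * nsum h unmatched_runs + potential h <= nsum h vertex_weight).
  { induction h; simpl.
    - unfold potential. rewrite L0, R0. simpl; lia.
    - pose proof (potential_step h). lia. }
  specialize (scan (S N)). unfold potential in scan.
  rewrite (LN (S N)), (RN (S N)) in scan by lia. cbn [andb orb] in scan. unfold unmatched_runs in scan. lia.
Qed.

End TwoColumns.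

Fixpoint run_end (g : nat -> bool) (fuel c : nat) : nat :=
  match fuel with
  | 0 => c
  | S fuel' => if g (S c) then run_end g fuel' (S c) else c
  end.

Lemma run_end_spec g N fuel c : g c = true -> (forall k, N < k -> g k = false) -> N - c <= fuel ->
  c <= run_end g fuel c /\ (forall k, c <= k <= run_end g fuel c -> g k = true) /\
  g (S (run_end g fuel c)) = false.
Proof.
  revert c. induction fuel; intros c hc hN hf; simpl.
  - assert (N <= c) by lia. repeat split; auto.
    + intros k hk. replace k with c by lia. auto.
    + apply hN; lia.
  - destruct (g (S c)) eqn:E.
    + destruct (IHfuel (S c) E hN ltac:(lia)) as [e1 [e2 e3]]. repeat split; auto; [lia|].
      intros k hk. destruct (Nat.eq_dec k c); subst; auto. apply e2; lia.
    + repeat split; auto. intros k hk; replace k with c by lia; auto.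
Qed.

Section Pieces.
Variable F : nat -> nat -> bool.
Variables K N : nat.
Hypothesis F_col0 : forall j, F 0 j = false.
Hypothesis F_row0 : forall c, F c 0 = false.
Hypothesis F_colK : forall c j, K < c -> F c j = false.
Hypothesis F_rowN : forall c j, N < j -> F c j = false.
Hypothesis no_diag1 :
  forall i j, ~ (F i j = true /\ F (S i) (S j) = true /\ F (S i) j = false /\ F i (S j) = false).
Hypothesis no_diag2 :
  forall i j, ~ (F (S i) j = true /\ F i (S j) = true /\ F i j = false /\ F (S i) (S j) = false).
Hypothesis F_nonempty : exists c j, F c j = true.

Definition col_run (c a b : nat) : bool := maxrun (F c) a b.
Definition piece_start (c a b : nat) : bool := col_run c a b && negb (col_run (pred c) a b).
Definition piece_end (c a b : nat) : nat := run_end (fun k => col_run k a b) K c.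

(* A piece (c, a, b) is the rectangle of cells with columns c .. piece_end c a b
   and rows a+1 .. b: a maximal vertical run repeated in consecutive columns. *)
Definition pieces : list (nat * nat * nat) :=
  filter (fun t : nat * nat * nat => let '(c, a, b) := t in piece_start c a b)
    (flat_map (fun c => flat_map (fun a => map (fun b => (c, a, b)) (seq 0 (S N))) (seq 0 (S N)))
       (seq 1 K)).

Lemma col_run_range c a b : col_run c a b = true -> 1 <= c <= K /\ a < b <= N.
Proof.
  intro h. apply maxrunP in h. destruct h as [h1 [h2 _]]. specialize (h2 b ltac:(lia)).
  destruct c; [rewrite F_col0 in h2; discriminate|].
  destruct (le_lt_dec (S c) K); [|rewrite F_colK in h2; [discriminate|lia]].
  destruct (le_lt_dec b N); [|rewrite F_rowN in h2; [discriminate|lia]]. lia.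
Qed.

Lemma col_run_out c a b : K < c \/ c = 0 -> col_run c a b = false.
Proof. intros h. destruct (col_run c a b) eqn:E; auto. apply col_run_range in E. lia. Qed.

Lemma in_pieces c a b : In (c, a, b) pieces <-> piece_start c a b = true.
Proof.
  unfold pieces. rewrite filter_In. split; [tauto|]. intro h; split; auto.
  apply andb_true_iff in h as [h _]. destruct (col_run_range c a b h).
  apply in_flat_map. exists c; split; [apply in_seq; lia|].
  apply in_flat_map. exists a; split; [apply in_seq; lia|].
  apply in_map_iff. exists b; split; auto. apply in_seq; lia.
Qed.

Lemma NoDup_pieces : NoDup pieces.
Proof.

  assert (Hmap : forall c a : nat, NoDup (map (fun b => (c, a, b)) (seq 0 (S N)))).
  { intros c a. apply NoDup_map_NoDup_ForallPairs; [|apply seq_NoDup]. intros x y _ _ h; congruence. }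
  apply NoDup_filter, NoDup_flat_map; [apply seq_NoDup| |].
  - intros c _. apply NoDup_flat_map; [apply seq_NoDup|auto|].
    intros x y z _ _ h1 h2. apply in_map_iff in h1, h2.
    destruct h1 as [? [<- _]], h2 as [? [h _]]; congruence.
  - intros x y z _ _ h1 h2. apply in_flat_map in h1, h2.
    destruct h1 as [? [_ h1]], h2 as [? [_ h2]]. apply in_map_iff in h1, h2.
    destruct h1 as [? [<- _]], h2 as [? [h _]]; congruence.
Qed.

Lemma piece_spec c a b : piece_start c a b = true ->
  1 <= c <= piece_end c a b /\ piece_end c a b <= K /\ a < b <= N /\
  (forall k, c <= k <= piece_end c a b -> col_run k a b = true) /\
  col_run (S (piece_end c a b)) a b = false /\ col_run (pred c) a b = false.
Proof.
  intro h. apply andb_true_iff in h as [h1 h2%negb_true_iff].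
  destruct (col_run_range c a b h1).
  destruct (run_end_spec (fun k => col_run k a b) K K c h1) as [e1 [e2 e3]];
    [intros; apply col_run_out; lia | lia |].
  fold (piece_end c a b) in e1, e2, e3.
  destruct (col_run_range _ _ _ (e2 (piece_end c a b) ltac:(lia))). repeat split; auto; lia.
Qed.

Lemma piece_unique c a b c' a' b' k j :
  In (c, a, b) pieces -> In (c', a', b') pieces ->
  c <= k <= piece_end c a b -> c' <= k <= piece_end c' a' b' -> a < j <= b -> a' < j <= b' ->
  (c, a, b) = (c', a', b').
Proof.
  intros h1%in_pieces%piece_spec h2%in_pieces%piece_spec k1 k2 j1 j2.
  destruct h1 as [_ [_ [_ [p4 [_ p6]]]]], h2 as [_ [_ [_ [q4 [_ q6]]]]].
  destruct (maxrun_unique (F k) a b a' b' j (F_row0 k) (p4 k k1) (q4 k k2) j1 j2) as [-> ->].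
  destruct (lt_eq_lt_dec c c') as [[h|h]|h]; subst; auto.
  - rewrite p4 in q6; [discriminate|lia].
  - rewrite q4 in p6; [discriminate|lia].
Qed.

Lemma pieces_cover c j : F c j = true ->
  exists c1 a b, In (c1, a, b) pieces /\ c1 <= c <= piece_end c1 a b /\ a < j <= b.
Proof.
  intro h.
  set (a := run_start (F c) j). set (b := run_end (F c) N j).
  destruct (run_start_spec (F c) j (F_row0 c) h) as [a1 [a2 a3]].
  destruct (run_end_spec (F c) N N j h (F_rowN c)) as [b1 [b2 b3]]; [lia|].
  assert (hr : col_run c a b = true).
  { apply maxrunP. fold a b in a1, a2, a3, b1, b2, b3. repeat split; auto; try lia.
    intros k hk. destruct (le_lt_dec k j); [apply a3|apply b2]; lia. }
  destruct (run_start_spec (fun k => col_run k a b) c (col_run_out 0 a b ltac:(lia)) hr)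
    as [c1 [c2 c3]].
  set (c0 := run_start _ c) in *.
  assert (hs : piece_start (S c0) a b = true).
  { unfold piece_start. simpl. rewrite c2, (c3 (S c0)) by lia. reflexivity. }
  exists (S c0), a, b. split; [apply in_pieces; auto|].
  destruct (piece_spec _ _ _ hs) as [p1 [_ [_ [_ [p5 _]]]]].
  split; [|fold a b in a1, b1; lia]. split; [lia|].
  destruct (le_lt_dec c (piece_end (S c0) a b)); auto.
  rewrite c3 in p5; [discriminate|lia].
Qed.

Definition vertex_count (i j : nat) : nat :=
  Nat.b2n (F i j) + Nat.b2n (F (S i) j) + Nat.b2n (F i (S j)) + Nat.b2n (F (S i) (S j)).
Definition convex_vertex (i j : nat) : bool := vertex_count i j =? 1.
Definition reflex_vertex (i j : nat) : bool := vertex_count i j =? 3.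
Definition n_convex : nat := nsum (S K) (fun i => nsum (S N) (fun j => Nat.b2n (convex_vertex i j))).
Definition n_reflex : nat := nsum (S K) (fun i => nsum (S N) (fun j => Nat.b2n (reflex_vertex i j))).

Lemma length_pieces :
  length pieces = nsum K (fun k => nsum (S N) (fun a => nsum (S N) (fun b => Nat.b2n (piece_start (S k) a b)))).
Proof.
  unfold pieces. rewrite length_filter_flat_map. apply nsum_ext. intros k _.
  rewrite length_filter_flat_map. apply nsum_ext. intros a _.
  rewrite length_filter_map_seq. reflexivity.
Qed.

(* Each piece with rows (a, b] is counted once where it starts and once where it ends. *)
Lemma twice_piece_starts a b :
  2 * nsum K (fun k => Nat.b2n (piece_start (S k) a b)) =
  nsum (S K) (fun k => Nat.b2n (xorb (col_run k a b) (col_run (S k) a b))).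
Proof.
  set (rises := fun k => Nat.b2n (col_run (S k) a b && negb (col_run k a b))).
  set (falls := fun k => Nat.b2n (col_run k a b && negb (col_run (S k) a b))).
  assert (hx : nsum (S K) (fun k => Nat.b2n (xorb (col_run k a b) (col_run (S k) a b))) =
               nsum (S K) rises + nsum (S K) falls).
  { rewrite <- nsum_add. apply nsum_ext. intros k _. unfold rises, falls.
    destruct (col_run k a b), (col_run (S k) a b); reflexivity. }
  pose proof (nsum_rises_falls (fun k => col_run k a b) (S K)) as hu. cbv beta in hu.
  rewrite (col_run_out 0), (col_run_out (S K)) in hu by lia. fold rises falls in hu.
  assert (hs : nsum (S K) rises = nsum K (fun k => Nat.b2n (piece_start (S k) a b))).
  { cbn [nsum]. unfold rises at 2. rewrite (col_run_out (S K)) by lia. apply Nat.add_0_r. }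
  cbn [Nat.b2n] in hu. lia.
Qed.

Lemma four_pieces_le : 4 * length pieces <= n_convex + 3 * n_reflex.
Proof.
  assert (H2 : 2 * length pieces = nsum (S K) (fun k => nsum (S N) (fun a => nsum (S N) (fun b =>
            Nat.b2n (xorb (col_run k a b) (col_run (S k) a b)))))).
  { rewrite length_pieces, nsum_swap, (nsum_swap (S K)), <- nsum_scale. apply nsum_ext. intros a _.
    rewrite nsum_swap, (nsum_swap (S K)), <- nsum_scale. apply nsum_ext. intros b _.
    apply twice_piece_starts. }
  unfold n_convex, n_reflex. rewrite <- nsum_scale, <- nsum_add.
  replace (4 * length pieces) with (2 * (2 * length pieces)) by lia. rewrite H2, <- nsum_scale.
  apply nsum_le. intros k _. cbv beta.
  rewrite <- (nsum_scale (S N) 3), <- nsum_add.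
  apply (two_columns_bound (F k) (F (S k)) N); auto.
Qed.

Lemma column_ends c : (exists j, F c j = true) ->
  exists j1 j2, j1 <> j2 /\ j1 <= N /\ j2 <= N /\
    F c j1 = false /\ F c (S j1) = true /\ F c j2 = true /\ F c (S j2) = false.
Proof.
  intro hc.
  destruct (least_witness (F c) hc) as [ja [ha1 ha2]].
  destruct (greatest_witness (F c) N hc (F_rowN c)) as [jb [hb1 hb2]].
  assert (ja <> 0) by (intros ->; rewrite F_row0 in ha1; discriminate).
  assert (ja <= jb) by (destruct (le_lt_dec ja jb); auto; rewrite hb2 in ha1; [discriminate|lia]).
  assert (jb <= N) by (destruct (le_lt_dec jb N); auto; rewrite F_rowN in hb1; [discriminate|lia]).
  exists (pred ja), jb. repeat split; try lia.
  - apply ha2; lia.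
  - replace (S (pred ja)) with ja by lia; auto.
  - auto.
  - apply hb2; lia.
Qed.

(* The leftmost and the rightmost nonempty columns each carry two convex vertices. *)
Lemma four_le_n_convex : 4 <= n_convex.
Proof.
  set (col := fun c => existsb (fun j => F c j) (seq 0 (S N))).
  assert (colP : forall c, col c = true <-> exists j, F c j = true).
  { intro c. unfold col. rewrite existsb_exists. split; [intros [j [_ h]]; eauto|].
    intros [j h]. exists j; split; auto. apply in_seq.
    destruct (le_lt_dec j N); [lia|]. rewrite F_rowN in h; [discriminate|lia]. }
  assert (col_out : forall k, K < k -> col k = false).
  { intros k hk. destruct (col k) eqn:E; auto. apply colP in E as [j E].
    rewrite F_colK in E; [discriminate|lia]. }
  assert (hex : exists c, col c = true) by (destruct F_nonempty as [c0 [j0 h0]]; exists c0; apply colP; eauto).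
  destruct (least_witness col hex) as [cm [hm1 hm2]].
  destruct (greatest_witness col K hex col_out) as [cM [hM1 hM2]].
  assert (cm <> 0) by (intros ->; apply colP in hm1 as [j hj]; rewrite F_col0 in hj; discriminate).
  assert (cm <= cM) by (destruct (le_lt_dec cm cM); auto; rewrite hM2 in hm1; [discriminate|lia]).
  assert (cM <= K) by (destruct (le_lt_dec cM K); auto; rewrite col_out in hM1; [discriminate|lia]).
  assert (hm0 : forall j, F (pred cm) j = false).
  { intro j. destruct (F (pred cm) j) eqn:E; auto.
    pose proof (proj2 (colP (pred cm)) (ex_intro _ j E)) as h.
    rewrite hm2 in h; [discriminate|lia]. }
  assert (hM0 : forall j, F (S cM) j = false).
  { intro j. destruct (F (S cM) j) eqn:E; auto.
    pose proof (proj2 (colP (S cM)) (ex_intro _ j E)) as h.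
    rewrite hM2 in h; [discriminate|lia]. }
  apply colP in hm1, hM1.
  destruct (column_ends cm hm1) as [a1 [a2 [ha [ha1 [ha2 [ha3 [ha4 [ha5 ha6]]]]]]]].
  destruct (column_ends cM hM1) as [b1 [b2 [hb [hb1 [hb2 [hb3 [hb4 [hb5 hb6]]]]]]]].
  unfold n_convex.
  assert (left2 : 2 <= nsum (S N) (fun j => Nat.b2n (convex_vertex (pred cm) j))).
  { eapply Nat.le_trans; [|apply (nsum_ge2 _ _ a1 a2); lia].
    unfold convex_vertex, vertex_count. replace (S (pred cm)) with cm by lia.
    rewrite !hm0, ha3, ha4, ha5, ha6. simpl. lia. }
  assert (right2 : 2 <= nsum (S N) (fun j => Nat.b2n (convex_vertex cM j))).
  { eapply Nat.le_trans; [|apply (nsum_ge2 _ _ b1 b2); lia].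
    unfold convex_vertex, vertex_count. rewrite !hM0, hb3, hb4, hb5, hb6. simpl. lia. }
  eapply Nat.le_trans; [|apply (nsum_ge2 _ _ (pred cm) cM); lia]. lia.
Qed.

Theorem pieces_bound : 4 * length pieces + 8 <= 3 * (n_convex + n_reflex).
Proof. pose proof four_pieces_le; pose proof four_le_n_convex; lia. Qed.

End Pieces.

(** * Local shapes of an orthogonal region *)

Open Scope R_scope.

Lemma Rabs_lt_iff x e : Rabs x < e <-> -e < x < e.
Proof. split; intro H; [destruct (Rabs_def2 _ _ H); lra | apply Rabs_def1; lra]. Qed.

Lemma Rabs_le_iff x e : Rabs x <= e <-> -e <= x <= e.
Proof. unfold Rabs; destruct (Rcase_abs x); split; intros; lra. Qed.

Ltac rabs := repeat match goal with
  | H : Rabs _ < _ |- _ => apply Rabs_lt_iff in H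
  | H : Rabs _ <= _ |- _ => apply Rabs_le_iff in H
  | |- Rabs _ < _ => apply Rabs_lt_iff
  | |- Rabs _ <= _ => apply Rabs_le_iff
  end.

Inductive shape :=
  | ShFull | ShEmpty | ShHalfX (s : bool) | ShHalfY (s : bool)
  | ShQuadrant (s t : bool) | ShThreeQuad (s t : bool).

Definition shape_pred (m : shape) : R -> R -> Prop :=
  match m with
  | ShFull => model_full | ShEmpty => model_empty
  | ShHalfX s => model_halfx s | ShHalfY s => model_halfy s
  | ShQuadrant s t => model_quadrant s t | ShThreeQuad s t => model_threequad s t
  end.

Definition corner_shape (m : shape) : Prop :=
  exists s t, m = ShQuadrant s t \/ m = ShThreeQuad s t.

Definition signed (s : bool) (d : R) : R := if s then d else - d.

Definition shape_quadrant (m : shape) (sx sy : bool) : bool :=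
  match m with
  | ShFull => true | ShEmpty => false
  | ShHalfX s => Bool.eqb sx s | ShHalfY s => Bool.eqb sy s
  | ShQuadrant s t => Bool.eqb sx s && Bool.eqb sy t
  | ShThreeQuad s t => negb (Bool.eqb sx s && Bool.eqb sy t)
  end.

Ltac unfold_models :=
  unfold model_full, model_empty, model_halfx, model_halfy, model_quadrant, model_threequad in *.

Lemma shape_quadrantP m sx sy d : 0 < d ->
  (shape_pred m (signed sx d) (signed sy d) <-> shape_quadrant m sx sy = true).
Proof.
  intro hd. destruct m; simpl; unfold_models;
    try destruct s; try destruct t; destruct sx, sy; simpl; split; intros; try tauto; try lra;
    try discriminate; try (destruct H; lra); try (exfalso; apply H; lra); try (intros [? ?]; lra).
Qed.

Lemma signed_small s d e : 0 < d < e -> Rabs (signed s d) < e.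
Proof. intros. destruct s; simpl; rabs; lra. Qed.

Lemma shape_pred_origin m : m <> ShEmpty -> shape_pred m 0 0.
Proof.
  destruct m; simpl; unfold_models; intros; try destruct s; try destruct t;
    try congruence; try lra; auto.
Qed.

Lemma shape_quadrant_in m : m <> ShEmpty -> exists sx sy, shape_quadrant m sx sy = true.
Proof.
  intro h. destruct m; try congruence.
  - exists true, true; reflexivity.
  - exists s, true; apply Bool.eqb_reflx.
  - exists true, s; apply Bool.eqb_reflx.
  - exists s, t; simpl; rewrite !Bool.eqb_reflx; reflexivity.
  - exists s, (negb t); simpl; rewrite Bool.eqb_reflx; destruct t; reflexivity.
Qed.

Lemma shape_quadrant_out m : m <> ShFull -> exists sx sy, shape_quadrant m sx sy = false.
Proof.
  intro h. destruct m; try congruence.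
  - exists true, true; reflexivity.
  - exists (negb s), true; destruct s; reflexivity.
  - exists true, (negb s); destruct s; reflexivity.
  - exists (negb s), t; destruct s; reflexivity.
  - exists s, t; simpl; rewrite !Bool.eqb_reflx; reflexivity.
Qed.

Lemma corner_shape_flips m : corner_shape m ->
  (exists sx sy, shape_quadrant m sx sy <> shape_quadrant m (negb sx) sy) /\
  (exists sx sy, shape_quadrant m sx sy <> shape_quadrant m sx (negb sy)).
Proof.
  intros [s [t [-> | ->]]]; split; exists s, t; destruct s, t; discriminate.
Qed.

Definition along_edge (m : shape) (a b : R) : Prop :=
  (a = 0 /\ (b = 1 \/ b = -1) /\ exists s, m = ShHalfX s) \/
  (b = 0 /\ (a = 1 \/ a = -1) /\ exists s, m = ShHalfY s).

Lemma along_edge_bounded m a b : along_edge m a b -> Rabs a <= 1 /\ Rabs b <= 1.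
Proof. intros [[-> [[-> | ->] _]] | [-> [[-> | ->] _]]]; split; rabs; lra. Qed.

Lemma along_edge_translate m a b t u v : along_edge m a b ->
  (shape_pred m (u + a * t) (v + b * t) <-> shape_pred m u v).
Proof.
  intros [[-> [_ [s ->]]] | [-> [_ [s ->]]]]; simpl; rewrite Rmult_0_l, Rplus_0_r; reflexivity.
Qed.

Lemma along_edge_rigid m0 m a b t e : along_edge m0 a b -> 0 < e ->
  (forall u v, Rabs u < e -> Rabs v < e -> (shape_pred m0 u v <-> shape_pred m (u + a * t) (v + b * t))) ->
  m = m0 \/ corner_shape m.
Proof.
  intros hedge he H.
  assert (h1 : Rabs (e/2) < e) by (rabs; lra).
  assert (h2 : Rabs (-(e/2)) < e) by (rabs; lra).
  assert (h0 : Rabs 0 < e) by (rewrite Rabs_R0; lra).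
  destruct hedge as [[-> [_ [s ->]]] | [-> [_ [s ->]]]].
  - pose proof (H _ _ h1 h0) as H1; pose proof (H _ _ h2 h0) as H2.
    rewrite Rmult_0_l, Rplus_0_r in H1, H2.
    destruct m; simpl in *; unfold_models; try (right; eexists; eexists; eauto; fail);
      destruct s; try destruct s0; simpl in *; try (left; reflexivity); exfalso;
      try tauto; destruct H1, H2; lra.
  - pose proof (H _ _ h0 h1) as H1; pose proof (H _ _ h0 h2) as H2.
    rewrite Rmult_0_l, Rplus_0_r in H1, H2.
    destruct m; simpl in *; unfold_models; try (right; eexists; eexists; eauto; fail);
      destruct s; try destruct s0; simpl in *; try (left; reflexivity); exfalso;
      try tauto; destruct H1, H2; lra.
Qed.

Definition like_within (P : point -> Prop) (p : point) (M : R -> R -> Prop) (eps : R) : Prop :=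
  0 < eps /\ forall q : point, Rabs (fst q - fst p) < eps -> Rabs (snd q - snd p) < eps ->
    (P q <-> M (fst q - fst p) (snd q - snd p)).

Definition locally_modelled (P : point -> Prop) : Prop :=
  forall p, exists m, locally_like P p (shape_pred m).

Definition ray (p : point) (a b t : R) : point := (fst p + a * t, snd p + b * t).

Lemma ray_close p a b t T e : Rabs a <= 1 -> Rabs b <= 1 -> Rabs (t - T) < e ->
  Rabs (fst (ray p a b t) - fst (ray p a b T)) < e /\ Rabs (snd (ray p a b t) - snd (ray p a b T)) < e.
Proof.
  intros ha hb ht. unfold ray; simpl.
  replace (fst p + a * t - (fst p + a * T)) with (a * (t - T)) by ring.
  replace (snd p + b * t - (snd p + b * T)) with (b * (t - T)) by ring.
  rewrite !Rabs_mult. pose proof (Rabs_pos (t - T)). split; nra.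
Qed.

Section LocalShape.
Variable P : point -> Prop.

Lemma like_within_at p M eps u v : like_within P p M eps -> Rabs u < eps -> Rabs v < eps ->
  (P (fst p + u, snd p + v) <-> M u v).
Proof.
  intros [_ H] hu hv. rewrite H; simpl; replace (fst p + u - fst p) with u by ring;
    replace (snd p + v - snd p) with v by ring; tauto.
Qed.

Lemma like_within_center p M eps : like_within P p M eps -> (P p <-> M 0 0).
Proof.
  intros h. destruct p as [x y]. pose proof (like_within_at (x, y) M eps 0 0 h) as H.
  simpl in H. rewrite !Rplus_0_r, Rabs_R0 in H. destruct h. auto.
Qed.

Lemma like_within_agree p M1 M2 e1 e2 : like_within P p M1 e1 -> like_within P p M2 e2 ->
  forall u v, Rabs u < Rmin e1 e2 -> Rabs v < Rmin e1 e2 -> (M1 u v <-> M2 u v).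
Proof.
  intros h1 h2 u v hu hv. pose proof (Rmin_l e1 e2); pose proof (Rmin_r e1 e2).
  rewrite <- (like_within_at p M1 e1 u v), <- (like_within_at p M2 e2 u v); auto; try tauto; lra.
Qed.

Lemma like_within_shift p M eps q :
  like_within P p M eps -> Rabs (fst q - fst p) < eps/2 -> Rabs (snd q - snd p) < eps/2 ->
  like_within P q (fun u v => M (u + (fst q - fst p)) (v + (snd q - snd p))) (eps/2).
Proof.
  intros [he H] h1 h2; split; [lra|]. intros r r1 r2.
  rewrite H by (rabs; lra).
  replace (fst r - fst q + (fst q - fst p)) with (fst r - fst p) by ring.
  replace (snd r - snd q + (snd q - snd p)) with (snd r - snd p) by ring. reflexivity.
Qed.

Lemma like_shape_boundary p m eps : like_within P p (shape_pred m) eps ->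
  m <> ShFull -> m <> ShEmpty -> boundary_pt P p.
Proof.
  intros h hf he. split.
  - apply (like_within_center p _ eps h), shape_pred_origin, he.
  - intros [e' He']. destruct (shape_quadrant_out m hf) as [sx [sy hq]].
    set (d := Rmin eps e' / 2).
    assert (0 < Rmin eps e') by (apply Rmin_glb_lt; [apply h | apply He']).
    assert (hd : Rabs (signed sx d) < Rmin eps e' /\ Rabs (signed sy d) < Rmin eps e')
      by (unfold d; destruct sx, sy; simpl; split; rabs; lra).
    rewrite Rmin_comm in hd.
    assert (hin : shape_pred m (signed sx d) (signed sy d))
      by (apply (like_within_agree p model_full _ e' eps He' h); tauto || exact I).
    apply (shape_quadrantP m sx sy d) in hin; [congruence | unfold d; lra].
Qed.

End LocalShape.

Lemma lub_approx E T : is_lub E T -> forall e, 0 < e -> exists t, E t /\ T - e < t <= T.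
Proof.
  intros [H1 H2] e he. apply NNPP; intro C.
  enough (T <= T - e) by lra. apply H2. intros t Et.
  destruct (Rle_dec t (T - e)); auto. exfalso; apply C; exists t; split; auto; split; [lra|]. apply H1; auto.
Qed.

Lemma sign_change (Q : R -> Prop) L : 0 <= L -> Q 0 -> ~ Q L ->
  exists T, 0 <= T <= L /\ forall e, 0 < e ->
    (exists t, Rabs (t - T) < e /\ Q t) /\ (exists t, Rabs (t - T) < e /\ ~ Q t).
Proof.
  intros hL Q0 QL.
  set (E := fun t => 0 <= t <= L /\ forall u, 0 <= u <= t -> Q u).
  destruct (completeness E) as [T HT].
  - exists L; intros t Et; apply Et.
  - exists 0. split; [lra|]. intros u hu. replace u with 0 by lra. exact Q0.
  - assert (T0 : 0 <= T) by (apply (proj1 HT); split; [lra|]; intros u hu; replace u with 0 by lra; auto).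
    assert (TL : T <= L) by (apply (proj2 HT); intros t Et; apply Et).
    assert (below : forall u, 0 <= u < T -> Q u).
    { intros u hu. destruct (lub_approx E T HT (T - u)) as [t [[_ Et] ht]]; [lra|]. apply Et; lra. }
    exists T. split; [lra|]. intros e he. split.
    + destruct (lub_approx E T HT e he) as [t [[ht Et] het]].
      exists t. split; [rabs; lra | apply Et; lra].
    + apply NNPP. intro hn.
      assert (near : forall t, Rabs (t - T) < e -> Q t).
      { intros t ht. apply NNPP. intro hq. apply hn. exists t; auto. }
      destruct (Req_dec T L) as [<-|hTL].
      * apply QL, near. rewrite Rminus_diag, Rabs_R0. lra.
      * set (T' := Rmin L (T + e/2)).
        assert (T < T') by (apply Rmin_glb_lt; lra).
        assert (T' <= L) by apply Rmin_l. assert (T' <= T + e/2) by apply Rmin_r.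
        enough (E T') by (assert (T' <= T) by (apply (proj1 HT); auto); lra).
        split; [lra|]. intros u hu. destruct (Rlt_le_dec u T); [apply below; lra|].
        apply near. rabs; lra.
Qed.

Section Boundary.
Variable P : point -> Prop.
Hypothesis P_modelled : locally_modelled P.

Lemma boundary_between p a b L : Rabs a <= 1 -> Rabs b <= 1 -> 0 <= L ->
  ~ (P p <-> P (ray p a b L)) -> exists t, 0 <= t <= L /\ boundary_pt P (ray p a b t).
Proof.
  intros ha hb hL hne.
  destruct (sign_change (fun t => P (ray p a b t) <-> P p) L) as [T [hT change]]; auto.
  { unfold ray. rewrite !Rmult_0_r, !Rplus_0_r. destruct p; tauto. }
  { intro h; apply hne; tauto. }
  exists T. split; auto.
  destruct (P_modelled (ray p a b T)) as [m [eps hm]].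
  assert (heps : 0 < eps) by apply hm.
  destruct (classic (m = ShFull \/ m = ShEmpty)) as [hfe|hfe].
  - exfalso. destruct (change eps heps) as [[t [ht Qt]] [t' [ht' Qt']]].
    assert (const : forall u, Rabs (u - T) < eps -> (P (ray p a b u) <-> P (ray p a b T))).
    { intros u hu. destruct (ray_close p a b u T eps ha hb hu) as [c1 c2].
      destruct hm as [_ H]. rewrite (H _ c1 c2), (H (ray p a b T)) by (rewrite Rminus_diag, Rabs_R0; lra).
      destruct hfe as [-> | ->]; simpl; unfold_models; tauto. }
    apply Qt'. rewrite (const t' ht'), <- (const t ht). exact Qt.
  - apply (like_shape_boundary P _ m eps hm); tauto.
Qed.

Lemma boundary_on_segment q1 q2 : ~ (P q1 <-> P q2) ->
  exists lam, 0 <= lam <= 1 /\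
    boundary_pt P (fst q1 + lam * (fst q2 - fst q1), snd q1 + lam * (snd q2 - snd q1)).
Proof.
  intro hne.
  set (L := Rabs (fst q2 - fst q1) + Rabs (snd q2 - snd q1) + 1).
  pose proof (Rabs_pos (fst q2 - fst q1)); pose proof (Rabs_pos (snd q2 - snd q1)).
  assert (hL : 1 <= L) by (unfold L; lra).
  assert (unit : forall z, Rabs z <= L - 1 -> Rabs (z / L) <= 1).
  { intros z hz. unfold Rdiv. rewrite Rabs_mult, Rabs_inv, (Rabs_right L) by lra.
    apply (Rmult_le_reg_r L); [lra|]. rewrite Rmult_assoc, Rinv_l, Rmult_1_r by lra. lra. }
  destruct (boundary_between q1 ((fst q2 - fst q1) / L) ((snd q2 - snd q1) / L) L)
    as [t [ht hb]]; try (apply unit; unfold L; lra); [lra| |].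
  - unfold ray. replace (fst q1 + (fst q2 - fst q1) / L * L) with (fst q2) by (field; lra).
    replace (snd q1 + (snd q2 - snd q1) / L * L) with (snd q2) by (field; lra).
    destruct q2; exact hne.
  - exists (t / L). split.
    + split; [apply Rmult_le_pos; [lra | left; apply Rinv_0_lt_compat; lra]|].
      apply (Rmult_le_reg_r L); [lra|]. unfold Rdiv. rewrite Rmult_assoc, Rinv_l by lra. lra.
    + unfold ray in hb. replace (t / L * (fst q2 - fst q1)) with ((fst q2 - fst q1) / L * t) by (field; lra).
      replace (t / L * (snd q2 - snd q1)) with ((snd q2 - snd q1) / L * t) by (field; lra). exact hb.
Qed.

End Boundary.

Lemma ray_0 p a b : ray p a b 0 = p.
Proof. unfold ray. rewrite !Rmult_0_r, !Rplus_0_r. destruct p; reflexivity. Qed.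

Lemma like_within_ray_shift P p a b T t M eps : Rabs a <= 1 -> Rabs b <= 1 ->
  like_within P (ray p a b T) M eps -> Rabs (t - T) < eps/2 ->
  like_within P (ray p a b t) (fun u v => M (u + a * (t - T)) (v + b * (t - T))) (eps/2).
Proof.
  intros ha hb h ht.
  assert (e1 : fst (ray p a b t) - fst (ray p a b T) = a * (t - T)) by (unfold ray; simpl; ring).
  assert (e2 : snd (ray p a b t) - snd (ray p a b T) = b * (t - T)) by (unfold ray; simpl; ring).
  destruct (ray_close p a b t T (eps/2) ha hb ht).
  rewrite <- e1, <- e2. apply like_within_shift; auto.
Qed.

Lemma corner_of_shape P p m : locally_like P p (shape_pred m) -> corner_shape m -> corner P p.
Proof. intros h [s [t [-> | ->]]]; exists s, t; [left|right]; exact h. Qed.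

Section Edges.
Variable P : point -> Prop.
Hypothesis P_modelled : locally_modelled P.
Variable Mb : R.
Hypothesis P_bounded : forall q, P q -> Rabs (fst q) <= Mb /\ Rabs (snd q) <= Mb.

Lemma edge_reaches_corner p m0 a b : along_edge m0 a b -> locally_like P p (shape_pred m0) ->
  exists t, 0 <= t /\ corner P (ray p a b t).
Proof.
  intros hedge h0. destruct (along_edge_bounded m0 a b hedge) as [ha hb].
  assert (m0_in : shape_pred m0 0 0)
    by (apply shape_pred_origin; destruct hedge as [[_ [_ [s ->]]]|[_ [_ [s ->]]]]; discriminate).
  set (Q := fun t => locally_like P (ray p a b t) (shape_pred m0)).
  assert (out : ~ Q (2 * Mb + 1)).
  { intros [e he]. apply (like_within_center P _ _ e) in he. destruct h0 as [e0 h0].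
    apply (like_within_center P _ _ e0) in h0.
    destruct (P_bounded _ (proj2 he m0_in)), (P_bounded _ (proj2 h0 m0_in)). unfold ray in *; simpl in *.
    destruct hedge as [[-> [[-> | ->] _]] | [-> [[-> | ->] _]]]; rabs; lra. }
  assert (hMb : 0 <= Mb).
  { destruct h0 as [e0 h0]. apply (like_within_center P _ _ e0) in h0.
    destruct (P_bounded _ (proj2 h0 m0_in)). pose proof (Rabs_pos (fst p)). lra. }
  destruct (sign_change Q (2 * Mb + 1)) as [T [hT change]]; [lra| unfold Q; rewrite ray_0; auto | auto |].
  exists T. split; [lra|].
  destruct (P_modelled (ray p a b T)) as [m [eps hm]].
  assert (heps : 0 < eps/2) by (destruct hm; lra).
  destruct (change (eps/2) heps) as [[t [ht [e0 Qt]]] [t' [ht' Qt']]].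
  pose proof (like_within_ray_shift P p a b T t _ eps ha hb hm ht) as hshift.
  assert (hmin : 0 < Rmin e0 (eps/2)) by (apply Rmin_glb_lt; [apply Qt | lra]).
  destruct (along_edge_rigid m0 m a b (t - T) _ hedge hmin (like_within_agree P _ _ _ _ _ Qt hshift))
    as [-> | hc]; [|apply (corner_of_shape P _ m); [exists eps|]; auto].
  exfalso. apply Qt'. exists (eps/2).
  pose proof (like_within_ray_shift P p a b T t' _ eps ha hb hm ht') as h'.
  split; [lra|]. intros q hq1 hq2. rewrite (proj2 h' q hq1 hq2). apply along_edge_translate; auto.
Qed.

Lemma boundary_reaches_corner q : boundary_pt P q ->
  exists c, corner P c /\ (fst c = fst q \/ snd c = snd q).
Proof.
  intros [hq hint]. destruct (P_modelled q) as [m hm].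
  destruct m.
  - contradiction.
  - exfalso. destruct hm as [e hm]. apply (like_within_center P _ _ e) in hm. apply hm, hq.
  - destruct (edge_reaches_corner q (ShHalfX s) 0 1) as [t [_ ht]]; auto.
    { left. repeat split; auto. eauto. }
    exists (ray q 0 1 t). split; auto. left. unfold ray; simpl; ring.
  - destruct (edge_reaches_corner q (ShHalfY s) 1 0) as [t [_ ht]]; auto.
    { right. repeat split; auto. eauto. }
    exists (ray q 1 0 t). split; auto. right. unfold ray; simpl; ring.
  - exists q. split; [exists s, t; left; exact hm | auto].
  - exists q. split; [exists s, t; right; exact hm | auto].
Qed.

Lemma corner_exists : (exists q, P q) -> exists c, corner P c.
Proof.
  intros [q hq]. destruct (P_bounded q hq) as [hx _]. rabs.
  destruct (boundary_between P P_modelled q 1 0 (Mb + 1 - fst q)) as [t [_ hb]].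
  - rewrite Rabs_R1; lra.
  - rewrite Rabs_R0; lra.
  - lra.
  - intro h. apply h in hq. apply P_bounded in hq as [hx' _]. unfold ray in hx'; simpl in hx'. rabs. lra.
  - destruct (boundary_reaches_corner _ hb) as [c [hc _]]. eauto.
Qed.

End Edges.

(** * The grid of corner coordinates *)

Fixpoint insert_dedup (x : R) (l : list R) : list R :=
  match l with
  | [] => [x]
  | y :: l' => if Rlt_dec x y then x :: l else if Req_EM_T x y then l else y :: insert_dedup x l'
  end.

Fixpoint sort_dedup (l : list R) : list R :=
  match l with [] => [] | x :: l' => insert_dedup x (sort_dedup l') end.

Lemma in_insert_dedup x l z : In z (insert_dedup x l) <-> z = x \/ In z l.
Proof.
  induction l; simpl; [intuition congruence|].
  destruct (Rlt_dec x a); simpl; [intuition congruence|].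
  destruct (Req_EM_T x a); subst; simpl; [intuition congruence|].
  rewrite IHl; intuition congruence.
Qed.

Lemma insert_dedup_sorted x l : StronglySorted Rlt l -> StronglySorted Rlt (insert_dedup x l).
Proof.
  induction l; intros h; simpl; [repeat constructor|].
  inversion h; subst. destruct (Rlt_dec x a).
  - constructor; auto. constructor; auto. eapply Forall_impl; [|eauto]. intros; simpl in *; lra.
  - destruct (Req_EM_T x a); auto. constructor; auto. apply Forall_forall. intros z hz.
    apply in_insert_dedup in hz as [->|hz]; [lra|]. rewrite Forall_forall in H2; auto.
Qed.

Lemma in_sort_dedup l z : In z (sort_dedup l) <-> In z l.
Proof. induction l; simpl; [tauto|]. rewrite in_insert_dedup, IHl; intuition congruence. Qed.

Lemma sort_dedup_sorted l : StronglySorted Rlt (sort_dedup l).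
Proof. induction l; simpl; [constructor|]. apply insert_dedup_sorted; auto. Qed.

Lemma StronglySorted_nth l : StronglySorted Rlt l ->
  forall i j, (i < j < length l)%nat -> nth i l 0 < nth j l 0.
Proof.
  induction l; intros h i j hij; simpl in *; [lia|]. inversion h; subst.
  destruct i, j; try lia.
  - rewrite Forall_forall in H2. apply H2, nth_In. lia.
  - apply IHl; auto; lia.
Qed.

Lemma convex_comb_lt A u v lam : A < u -> A < v -> 0 <= lam <= 1 -> A < u + lam * (v - u).
Proof.
  intros h1 h2 h3. replace (u + lam * (v - u)) with ((1 - lam) * u + lam * v) by ring.
  destruct (Req_dec lam 0) as [->|]; [lra|]. nra.
Qed.

Lemma convex_comb_gt B u v lam : u < B -> v < B -> 0 <= lam <= 1 -> u + lam * (v - u) < B.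
Proof.
  intros h1 h2 h3. replace (u + lam * (v - u)) with ((1 - lam) * u + lam * v) by ring.
  destruct (Req_dec lam 0) as [->|]; [lra|]. nra.
Qed.

(* Slab c lies between grid (c - 1) and grid c; slabs 0 and S last_index are unbounded. *)
Section Slabs.
Variable xs : list R.
Hypothesis xs_sorted : StronglySorted Rlt xs.
Hypothesis xs_nonempty : xs <> [].

Definition last_index : nat := pred (length xs).
Definition grid (i : nat) : R := nth i xs 0.

Definition open_slab (c : nat) (x : R) : Prop :=
  (c <= S last_index)%nat /\ (c = 0%nat \/ grid (c - 1) < x) /\ (c = S last_index \/ x < grid c).
Definition closed_slab (c : nat) (x : R) : Prop :=
  (c <= S last_index)%nat /\ (c = 0%nat \/ grid (c - 1) <= x) /\ (c = S last_index \/ x <= grid c).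

Lemma length_xs : length xs = S last_index.
Proof. unfold last_index. destruct xs; [congruence|reflexivity]. Qed.

Lemma grid_lt i j : (i < j <= last_index)%nat -> grid i < grid j.
Proof. intros; apply StronglySorted_nth; auto. rewrite length_xs; lia. Qed.

Lemma grid_le i j : (i <= j <= last_index)%nat -> grid i <= grid j.
Proof. intros h. destruct (Nat.eq_dec i j) as [->|]; [lra|]. left; apply grid_lt; lia. Qed.

Lemma In_grid z : In z xs <-> exists i, (i <= last_index)%nat /\ grid i = z.
Proof.
  split.
  - intro h. destruct (In_nth xs z 0 h) as [i [h1 h2]]. exists i. rewrite length_xs in h1. split; auto; lia.
  - intros [i [h1 <-]]. apply nth_In. rewrite length_xs; lia.
Qed.

Lemma open_closed_slab c x : open_slab c x -> closed_slab c x.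
Proof. intros [h1 [[h2|h2] [h3|h3]]]; repeat split; auto; right; lra. Qed.

Lemma open_slab_not_grid c x : open_slab c x -> ~ In x xs.
Proof.
  intros [hc [lo hi]] hx. apply In_grid in hx as [i [hi' <-]].
  destruct (le_lt_dec c i).
  - destruct hi as [->|hi]; [lia|]. assert (grid c <= grid i) by (apply grid_le; lia). lra.
  - destruct lo as [->|lo]; [lia|]. assert (grid i <= grid (c - 1)) by (apply grid_le; lia). lra.
Qed.

Lemma open_slab_convex c x y lam : open_slab c x -> open_slab c y -> 0 <= lam <= 1 ->
  open_slab c (x + lam * (y - x)).
Proof.
  intros [hc [lx hx]] [_ [ly hy]] hl. split; auto. split.
  - destruct lx as [->|lx]; auto. destruct ly as [->|ly]; auto. right; apply convex_comb_lt; auto.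
  - destruct hx as [->|hx]; auto. destruct hy as [->|hy]; auto. right; apply convex_comb_gt; auto.
Qed.

Lemma open_slab_open c x : open_slab c x -> exists g, 0 < g /\ forall x', Rabs (x' - x) < g -> open_slab c x'.
Proof.
  intros [hc [lo hi]].
  set (g1 := if Nat.eqb c 0 then 1 else x - grid (c - 1)).
  set (g2 := if Nat.eqb c (S last_index) then 1 else grid c - x).
  assert (0 < g1) by (unfold g1; destruct (Nat.eqb_spec c 0), lo; lra || lia).
  assert (0 < g2) by (unfold g2; destruct (Nat.eqb_spec c (S last_index)), hi; lra || lia).
  exists (Rmin g1 g2). split; [apply Rmin_glb_lt; auto|]. intros x' hx'.
  pose proof (Rmin_l g1 g2); pose proof (Rmin_r g1 g2). rabs. repeat split; auto.
  - destruct (Nat.eq_dec c 0) as [->|c0]; [left; auto|right].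
    destruct lo as [|lo]; [lia|]. unfold g1 in *. destruct (Nat.eqb_spec c 0); [lia|lra].
  - destruct (Nat.eq_dec c (S last_index)) as [->|cK]; [left; auto|right].
    destruct hi as [|hi]; [lia|]. unfold g2 in *. destruct (Nat.eqb_spec c (S last_index)); [lia|lra].
Qed.

Lemma slab_locate_co c1 c2 x : (1 <= c1 <= c2)%nat -> (c2 <= last_index)%nat ->
  grid (c1 - 1) <= x < grid c2 -> exists c, (c1 <= c <= c2)%nat /\ grid (c - 1) <= x < grid c.
Proof.
  induction c2; intros h1 h2 h3; [lia|].
  destruct (Nat.eq_dec c1 (S c2)) as [->|]; [exists (S c2); split; [lia|auto]|].
  destruct (Rlt_le_dec x (grid c2)).
  - destruct (IHc2 ltac:(lia) ltac:(lia)) as [c [hc1 hc2]]; [lra|]. exists c; split; auto; lia.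
  - exists (S c2); split; [lia|]. replace (S c2 - 1)%nat with c2 by lia. lra.
Qed.

Lemma slab_locate_cc c1 c2 x : (1 <= c1 <= c2)%nat -> (c2 <= last_index)%nat ->
  grid (c1 - 1) <= x <= grid c2 -> exists c, (c1 <= c <= c2)%nat /\ grid (c - 1) <= x <= grid c.
Proof.
  intros h1 h2 h3. destruct (Rlt_le_dec x (grid c2)).
  - destruct (slab_locate_co c1 c2 x h1 h2 ltac:(lra)) as [c [hc1 hc2]]. exists c; split; auto; lra.
  - exists c2; split; [lia|]. split; [|lra]. apply Rle_trans with (grid c2); [apply grid_le; lia|lra].
Qed.

Lemma slab_index_unique c c' x : (1 <= c <= last_index)%nat -> (1 <= c' <= last_index)%nat ->
  grid (c - 1) <= x < grid c -> grid (c' - 1) <= x < grid c' -> c = c'.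
Proof.
  intros h1 h2 h3 h4. destruct (lt_eq_lt_dec c c') as [[h|h]|h]; auto.
  - assert (grid c <= grid (c' - 1)) by (apply grid_le; lia). lra.
  - assert (grid c' <= grid (c - 1)) by (apply grid_le; lia). lra.
Qed.

Lemma closed_slab_approx c x : closed_slab c x ->
  forall e, 0 < e -> exists x', open_slab c x' /\ Rabs (x' - x) < e.
Proof.
  intros [hc [lo hi]] e he.
  destruct (Nat.eq_dec c 0) as [->|c0].
  { exists (x - e/2). destruct hi as [hi|hi]; [lia|]. repeat split; auto; [right; lra| rabs; lra]. }
  destruct lo as [|lo]; [lia|].
  destruct (Nat.eq_dec c (S last_index)) as [->|cK].
  { exists (x + e/2). repeat split; auto; [right; lra| rabs; lra]. }
  destruct hi as [|hi]; [lia|].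
  assert (grid (c - 1) < grid c) by (apply grid_lt; lia).
  set (d := Rmin e (grid c - grid (c - 1)) / 3).
  assert (0 < Rmin e (grid c - grid (c - 1))) by (apply Rmin_glb_lt; lra).
  pose proof (Rmin_l e (grid c - grid (c - 1))); pose proof (Rmin_r e (grid c - grid (c - 1))).
  destruct (Rle_lt_dec x ((grid (c - 1) + grid c) / 2));
    [exists (x + d) | exists (x - d)]; unfold d in *; repeat split; auto; try right; try lra; rabs; lra.
Qed.

Lemma closed_slab_grid i : (i <= last_index)%nat -> closed_slab i (grid i) /\ closed_slab (S i) (grid i).
Proof.
  intro hi. unfold closed_slab. repeat split; try lia.
  - destruct (Nat.eq_dec i 0); [left; auto | right; apply grid_le; lia].
  - right; lra.
  - right. replace (S i - 1)%nat with i by lia. lra.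
  - destruct (Nat.eq_dec i last_index) as [->|]; [left; auto | right; apply grid_le; lia].
Qed.

Lemma grid_gap i : (i <= last_index)%nat -> exists g, 0 < g /\
  forall d, 0 < d < g -> open_slab (S i) (grid i + d) /\ open_slab i (grid i - d).
Proof.
  intro hi.
  set (g1 := if Nat.ltb i last_index then grid (S i) - grid i else 1).
  set (g2 := if Nat.eqb i 0 then 1 else grid i - grid (i - 1)).
  assert (0 < g1).
  { unfold g1. destruct (Nat.ltb_spec i last_index); [|lra].
    assert (grid i < grid (S i)) by (apply grid_lt; lia). lra. }
  assert (0 < g2).
  { unfold g2. destruct (Nat.eqb_spec i 0); [lra|].
    assert (grid (i - 1) < grid i) by (apply grid_lt; lia). lra. }
  exists (Rmin g1 g2). split; [apply Rmin_glb_lt; auto|]. intros d hd.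
  pose proof (Rmin_l g1 g2); pose proof (Rmin_r g1 g2).
  unfold open_slab. replace (S i - 1)%nat with i by lia. repeat split; try lia.
  - right; lra.
  - destruct (Nat.eq_dec i last_index) as [->|]; [left; auto|right].
    unfold g1 in *. destruct (Nat.ltb_spec i last_index); [lra|lia].
  - destruct (Nat.eq_dec i 0) as [->|]; [left; auto|right].
    unfold g2 in *. destruct (Nat.eqb_spec i 0); [lia|lra].
  - right; lra.
Qed.

Lemma slab_or_grid x :
  (exists i, (i <= last_index)%nat /\ x = grid i) \/ (exists c, open_slab c x).
Proof.
  destruct (classic (In x xs)) as [hin|hout].
  { left. apply In_grid in hin as [i [hi <-]]. eauto. }
  right. destruct (Rlt_le_dec x (grid 0)).
  { exists 0%nat. unfold open_slab. repeat split; auto; lia. }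
  destruct (Rle_lt_dec x (grid last_index)) as [hle|].
  2: { exists (S last_index). unfold open_slab. replace (S last_index - 1)%nat with last_index by lia.
       repeat split; auto. }
  assert (hx : grid 0 < x < grid last_index).
  { split; apply Rnot_le_lt; intro h; apply hout, In_grid;
      [exists 0%nat | exists last_index]; split; auto; try lia; lra. }
  destruct (slab_locate_co 1 last_index x) as [c [hc [lo hi]]].
  - destruct (Nat.eq_dec last_index 0) as [e|]; [rewrite e in hx; lra | lia].
  - lia.
  - simpl. lra.
  - exists c. unfold open_slab. repeat split; try lia; right; auto.
    destruct lo; auto. exfalso; apply hout, In_grid. exists (c - 1)%nat; split; [lia|auto].
Qed.

Lemma slab_side x sx : exists c g, closed_slab c x /\ 0 < g /\
  forall d, 0 < d < g -> open_slab c (x + signed sx d).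
Proof.
  destruct (slab_or_grid x) as [[i [hi ->]] | [c hc]].
  - destruct (grid_gap i hi) as [g [hg H]]. destruct (closed_slab_grid i hi).
    destruct sx; [exists (S i), g | exists i, g]; do 2 (split; auto); intros d hd; simpl.
    + apply (H d hd).
    + replace (grid i + - d) with (grid i - d) by ring. apply (H d hd).
  - destruct (open_slab_open c x hc) as [g [hg H]]. exists c, g. split; [apply open_closed_slab; auto|].
    split; auto. intros d hd. apply H. replace (x + signed sx d - x) with (signed sx d) by ring.
    destruct sx; simpl; rabs; lra.
Qed.

Lemma open_slab_far B : (forall z, In z xs -> Rabs z <= B) ->
  open_slab 0 (-(B + 1)) /\ open_slab (S last_index) (B + 1).
Proof.
  intro hB. assert (h0 := hB (grid 0)). assert (hK := hB (grid last_index)).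
  rewrite In_grid in h0, hK. specialize (h0 (ex_intro _ 0%nat (conj (Nat.le_0_l _) eq_refl))).
  specialize (hK (ex_intro _ last_index (conj (Nat.le_refl _) eq_refl))). rabs.
  unfold open_slab. replace (S last_index - 1)%nat with last_index by lia.
  repeat split; auto; try lia; right; lra.
Qed.

Lemma closed_slab_bounds c x : (1 <= c <= last_index)%nat -> grid (c - 1) <= x <= grid c -> closed_slab c x.
Proof. intros hc hx. unfold closed_slab. repeat split; try lia; right; lra. Qed.

End Slabs.

(** * Polyominoes *)

Definition is_int (x : R) : Prop := exists z : Z, x = IZR z.

Lemma floor_exists x : exists k : Z, IZR k <= x < IZR k + 1.
Proof. destruct (archimed x) as [h1 h2]. exists (up x - 1)%Z. rewrite minus_IZR. simpl. lra. Qed.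

Lemma unit_interval_index i k x : IZR i <= x <= IZR i + 1 -> IZR k < x < IZR k + 1 -> i = k.
Proof.
  intros hi hk.
  assert (h1 : IZR i < IZR (k + 1)) by (rewrite plus_IZR; simpl; lra).
  assert (h2 : IZR k < IZR (i + 1)) by (rewrite plus_IZR; simpl; lra).
  apply lt_IZR in h1, h2. lia.
Qed.

Definition same_unit_interval (x y : R) : Prop :=
  x = y \/ exists k : Z, IZR k < x < IZR k + 1 /\ IZR k < y < IZR k + 1.

Lemma same_unit_interval_sym x y : same_unit_interval x y -> same_unit_interval y x.
Proof. intros [<- | [k [hx hy]]]; [left | right; exists k]; auto. Qed.

Lemma unit_interval_transfer i x y : same_unit_interval x y ->
  IZR i <= x <= IZR i + 1 -> IZR i <= y <= IZR i + 1.
Proof.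
  intros [<- | [k [hx hy]]] hi; auto.
  rewrite (unit_interval_index i k x hi hx). lra.
Qed.

Lemma polyomino_same_status P A B : polyomino P ->
  same_unit_interval (fst A) (fst B) -> same_unit_interval (snd A) (snd B) -> (P A <-> P B).
Proof.
  intros [cells Hc].
  assert (H : forall A B, same_unit_interval (fst A) (fst B) -> same_unit_interval (snd A) (snd B) ->
                P A -> P B).
  { intros A' B' hx hy [[i j] [hin [hci hcj]]]%Hc. apply Hc. exists (i, j).
    split; auto. split; eapply unit_interval_transfer; eauto. }
  intros hx hy. split; apply H; auto; apply same_unit_interval_sym; auto.
Qed.

Lemma unit_interval_near x : ~ is_int x ->
  exists g, 0 < g /\ forall u v, Rabs u < g -> Rabs v < g -> same_unit_interval (x + u) (x + v).
Proof.
  intro hn. destruct (floor_exists x) as [k hk].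
  assert (IZR k < x) by (destruct (Req_dec (IZR k) x) as [e|]; [exfalso; apply hn; exists k; auto | lra]).
  exists (Rmin (x - IZR k) (IZR k + 1 - x)). split; [apply Rmin_glb_lt; lra|].
  intros u v hu hv. pose proof (Rmin_l (x - IZR k) (IZR k + 1 - x)).
  pose proof (Rmin_r (x - IZR k) (IZR k + 1 - x)). right. exists k. rabs. lra.
Qed.

(* At a corner, flipping one coordinate across the corner changes membership in P,
   which a polyomino forbids inside an open unit interval. *)
Lemma polyomino_corner_integral P p : polyomino P -> corner P p -> is_int (fst p) /\ is_int (snd p).
Proof.
  intros hpoly [s [t hc]].
  assert (hm : exists m, locally_like P p (shape_pred m) /\ corner_shape m)
    by (destruct hc; [exists (ShQuadrant s t) | exists (ShThreeQuad s t)]; split; auto; exists s, t; auto).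
  destruct hm as [m [[eps hm] hcs]]. assert (he : 0 < eps) by apply hm.
  destruct (corner_shape_flips m hcs) as [[sx [sy hx]] [tx [ty hy]]].
  split; apply NNPP; intro hn; destruct (unit_interval_near _ hn) as [g [hg H]];
    set (d := Rmin eps g / 2); assert (0 < Rmin eps g) by (apply Rmin_glb_lt; auto);
    pose proof (Rmin_l eps g); pose proof (Rmin_r eps g);
    assert (hde : 0 < d < eps) by (unfold d; lra); assert (hdg : 0 < d < g) by (unfold d; lra).
  - apply hx, Bool.eq_iff_eq_true. rewrite <- !(shape_quadrantP m _ sy d) by lra.
    rewrite <- !(like_within_at P p _ eps _ _ hm) by (apply signed_small; auto).
    apply polyomino_same_status; simpl; auto; [apply H; apply signed_small; auto | left; auto].
  - apply hy, Bool.eq_iff_eq_true. rewrite <- !(shape_quadrantP m tx _ d) by lra.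
    rewrite <- !(like_within_at P p _ eps _ _ hm) by (apply signed_small; auto).
    apply polyomino_same_status; simpl; auto; [left; auto | apply H; apply signed_small; auto].
Qed.

Definition Z_range (a b : Z) : list Z := map (fun k => (a + Z.of_nat k)%Z) (seq 0 (Z.to_nat (b - a))).

Lemma in_Z_range a b i : In i (Z_range a b) <-> (a <= i < b)%Z.
Proof.
  unfold Z_range. rewrite in_map_iff. split.
  - intros [k [<- hk]]. apply in_seq in hk. lia.
  - intro h. exists (Z.to_nat (i - a)). split; [lia|]. apply in_seq. lia.
Qed.

Lemma floor_in_range a b x : (a < b)%Z -> IZR a <= x <= IZR b ->
  exists i, (a <= i < b)%Z /\ IZR i <= x <= IZR i + 1.
Proof.
  intros hab hx. destruct (floor_exists x) as [k hk].
  destruct (Z_lt_le_dec k b) as [|hkb].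
  - exists k. split; [|lra]. split; auto.
    assert (h : IZR a < IZR (k + 1)) by (rewrite plus_IZR; simpl; lra). apply lt_IZR in h. lia.
  - apply IZR_le in hkb. exists (b - 1)%Z. split; [lia|]. rewrite minus_IZR. simpl. lra.
Qed.

Lemma integral_rect_polyomino a b c d : (a < b)%Z -> (c < d)%Z ->
  polyomino (in_rect (IZR a, IZR b, IZR c, IZR d)).
Proof.
  intros hab hcd. exists (list_prod (Z_range a b) (Z_range c d)). intro q. simpl. split.
  - intros [hx hy]. destruct (floor_in_range a b (fst q) hab hx) as [i [hi hqi]].
    destruct (floor_in_range c d (snd q) hcd hy) as [j [hj hqj]].
    exists (i, j). split; [apply in_prod; apply in_Z_range; auto|]. unfold cell; simpl; auto.
  - intros [[i j] [hin hcell]]. apply in_prod_iff in hin as [h1%in_Z_range h2%in_Z_range].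
    unfold cell in hcell; simpl in hcell.
    assert (IZR a <= IZR i) by (apply IZR_le; lia). assert (IZR (i + 1) <= IZR b) by (apply IZR_le; lia).
    assert (IZR c <= IZR j) by (apply IZR_le; lia). assert (IZR (j + 1) <= IZR d) by (apply IZR_le; lia).
    rewrite plus_IZR in *. simpl in *. lra.
Qed.

(** * The partition *)

Section PolygonGrid.
Variable P : point -> Prop.
Hypothesis P_modelled : locally_modelled P.
Variable Mb : R.
Hypothesis P_bounded : forall q, P q -> Rabs (fst q) <= Mb /\ Rabs (snd q) <= Mb.
Hypothesis P_nonempty : exists q, P q.
Variable corners : list point.
Hypothesis corners_spec : forall p, In p corners <-> corner P p.

Definition Xs : list R := sort_dedup (map fst corners).
Definition Ys : list R := sort_dedup (map snd corners).
Definition K : nat := last_index Xs.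
Definition N : nat := last_index Ys.
Definition X : nat -> R := grid Xs.
Definition Y : nat -> R := grid Ys.

Lemma corner_in_P p : corner P p -> P p.
Proof.
  intros [s [t [[e h] | [e h]]]]; apply (like_within_center P p _ e h);
    [apply (shape_pred_origin (ShQuadrant s t)) | apply (shape_pred_origin (ShThreeQuad s t))]; discriminate.
Qed.

Lemma corner_coords p : corner P p -> In (fst p) Xs /\ In (snd p) Ys.
Proof. intros h%corners_spec. unfold Xs, Ys. rewrite !in_sort_dedup. split; apply in_map; auto. Qed.

Lemma Xs_bounded z : In z Xs -> Rabs z <= Mb.
Proof.
  unfold Xs. rewrite in_sort_dedup, in_map_iff. intros [p [<- hp%corners_spec%corner_in_P]].
  apply P_bounded, hp.
Qed.

Lemma Ys_bounded z : In z Ys -> Rabs z <= Mb.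
Proof.
  unfold Ys. rewrite in_sort_dedup, in_map_iff. intros [p [<- hp%corners_spec%corner_in_P]].
  apply P_bounded, hp.
Qed.

Lemma Xs_sorted : StronglySorted Rlt Xs.
Proof. apply sort_dedup_sorted. Qed.
Lemma Ys_sorted : StronglySorted Rlt Ys.
Proof. apply sort_dedup_sorted. Qed.

Lemma Xs_nonempty : Xs <> [].
Proof.
  destruct (corner_exists P P_modelled Mb P_bounded P_nonempty) as [c hc%corner_coords].
  intros e. rewrite e in hc. apply hc.
Qed.
Lemma Ys_nonempty : Ys <> [].
Proof.
  destruct (corner_exists P P_modelled Mb P_bounded P_nonempty) as [c hc%corner_coords].
  intros e. rewrite e in hc. apply hc.
Qed.

Lemma X_lt i j : (i < j <= K)%nat -> X i < X j.
Proof. apply grid_lt; [apply Xs_sorted | apply Xs_nonempty]. Qed.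
Lemma Y_lt i j : (i < j <= N)%nat -> Y i < Y j.
Proof. apply grid_lt; [apply Ys_sorted | apply Ys_nonempty]. Qed.
Lemma X_le i j : (i <= j <= K)%nat -> X i <= X j.
Proof. apply grid_le; [apply Xs_sorted | apply Xs_nonempty]. Qed.
Lemma Y_le i j : (i <= j <= N)%nat -> Y i <= Y j.
Proof. apply grid_le; [apply Ys_sorted | apply Ys_nonempty]. Qed.

(* Open grid cells, including the unbounded ones, contain no boundary point of P. *)
Lemma open_cell_same_status c j q1 q2 :
  open_slab Xs c (fst q1) -> open_slab Ys j (snd q1) ->
  open_slab Xs c (fst q2) -> open_slab Ys j (snd q2) -> (P q1 <-> P q2).
Proof.
  intros hx1 hy1 hx2 hy2. apply NNPP. intro hne.
  destruct (boundary_on_segment P P_modelled q1 q2 hne) as [lam [hlam hb]].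
  destruct (boundary_reaches_corner P P_modelled Mb P_bounded _ hb)
    as [c' [[hcx hcy]%corner_coords [e|e]]]; simpl in e; [rewrite e in hcx | rewrite e in hcy].
  - apply (open_slab_not_grid Xs Xs_sorted Xs_nonempty c _ (open_slab_convex Xs c _ _ lam hx1 hx2 hlam) hcx).
  - apply (open_slab_not_grid Ys Ys_sorted Ys_nonempty j _ (open_slab_convex Ys j _ _ lam hy1 hy2 hlam) hcy).
Qed.

Lemma exterior_cell_empty c j q :
  (c = 0 \/ c = S K \/ j = 0 \/ j = S N)%nat ->
  open_slab Xs c (fst q) -> open_slab Ys j (snd q) -> ~ P q.
Proof.
  intros hcj hx hy hq.
  destruct (open_slab_far Xs Xs_sorted Xs_nonempty Mb Xs_bounded) as [xl xr].
  destruct (open_slab_far Ys Ys_sorted Ys_nonempty Mb Ys_bounded) as [yl yr].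
  assert (far : exists q', open_slab Xs c (fst q') /\ open_slab Ys j (snd q') /\ ~ P q').
  { destruct hcj as [-> | [-> | [-> | ->]]];
      [exists (-(Mb + 1), snd q) | exists (Mb + 1, snd q) | exists (fst q, -(Mb + 1)) | exists (fst q, Mb + 1)];
      (split; [|split]); auto; intros h%P_bounded; simpl in h; destruct h; rabs; lra. }
  destruct far as [q' [hx' [hy' hq']]].
  apply hq', (open_cell_same_status c j q q'); auto.
Qed.

Definition cell_center (c j : nat) : point := ((X (c - 1) + X c) / 2, (Y (j - 1) + Y j) / 2).

Definition cell_filled (c j : nat) : bool :=
  if (1 <=? c)%nat && (c <=? K)%nat && (1 <=? j)%nat && (j <=? N)%nat
  then (if excluded_middle_informative (P (cell_center c j)) then true else false)
  else false.

Lemma cell_filled_range c j : cell_filled c j = true -> (1 <= c <= K /\ 1 <= j <= N)%nat.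
Proof.
  unfold cell_filled. destruct ((1 <=? c)%nat && _ && _ && _) eqn:E; [|discriminate].
  intros _. rewrite !andb_true_iff, !Nat.leb_le in E. lia.
Qed.

Lemma cell_status c j q : open_slab Xs c (fst q) -> open_slab Ys j (snd q) ->
  (P q <-> cell_filled c j = true).
Proof.
  intros hx hy. unfold cell_filled.
  destruct ((1 <=? c)%nat && (c <=? K)%nat && (1 <=? j)%nat && (j <=? N)%nat) eqn:E.
  - rewrite !andb_true_iff, !Nat.leb_le in E.
    assert (X (c - 1) < X c) by (apply X_lt; lia).
    assert (Y (j - 1) < Y j) by (apply Y_lt; lia).
    assert (hcx : open_slab Xs c (fst (cell_center c j)))
      by (unfold open_slab, cell_center, X, K in *; simpl; repeat split; try lia; right; lra).
    assert (hcy : open_slab Ys j (snd (cell_center c j)))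
      by (unfold open_slab, cell_center, Y, N in *; simpl; repeat split; try lia; right; lra).
    rewrite (open_cell_same_status c j q (cell_center c j)) by auto.
    destruct (excluded_middle_informative _); split; auto; discriminate.
  - split; [|discriminate]. intro hq. exfalso. apply (exterior_cell_empty c j q); auto.
    destruct hx as [hc _], hy as [hj _]. fold K N in hc, hj.
    rewrite !andb_false_iff, !Nat.leb_gt in E. lia.
Qed.

Lemma closed_cell_approx c j q e : closed_slab Xs c (fst q) -> closed_slab Ys j (snd q) -> 0 < e ->
  exists q', open_slab Xs c (fst q') /\ open_slab Ys j (snd q') /\
             Rabs (fst q' - fst q) < e /\ Rabs (snd q' - snd q) < e.
Proof.
  intros h1 h2 he.
  destruct (closed_slab_approx Xs Xs_sorted Xs_nonempty c (fst q) h1 e he) as [x' [hx1 hx2]].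
  destruct (closed_slab_approx Ys Ys_sorted Ys_nonempty j (snd q) h2 e he) as [y' [hy1 hy2]].
  exists (x', y'); auto.
Qed.

Lemma filled_cell_closure c j q : closed_slab Xs c (fst q) -> closed_slab Ys j (snd q) ->
  cell_filled c j = true -> P q.
Proof.
  intros h1 h2 hF. destruct (P_modelled q) as [m [eps hm]].
  destruct (classic (m = ShEmpty)) as [->|hne].
  - exfalso. destruct hm as [he H].
    destruct (closed_cell_approx c j q eps h1 h2 he) as [q' [o1 [o2 [d1 d2]]]].
    apply (H q' d1 d2), (cell_status c j q'); auto.
  - apply (like_within_center P q _ eps hm), shape_pred_origin, hne.
Qed.

Lemma empty_cell_closure c j q : closed_slab Xs c (fst q) -> closed_slab Ys j (snd q) ->
  cell_filled c j = false -> ~ interior_pt P q.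
Proof.
  intros h1 h2 hF [eps [he H]].
  destruct (closed_cell_approx c j q eps h1 h2 he) as [q' [o1 [o2 [d1 d2]]]].
  assert (hq' : P q') by (apply (H q' d1 d2); exact I).
  apply (cell_status c j q') in hq'; auto. congruence.
Qed.

Lemma point_in_filled_cell q : P q -> exists c j, (1 <= c <= K)%nat /\ (1 <= j <= N)%nat /\
  X (c - 1) <= fst q <= X c /\ Y (j - 1) <= snd q <= Y j /\ cell_filled c j = true.
Proof.
  intro hq. destruct (P_modelled q) as [m [eps hm]].
  assert (hne : m <> ShEmpty) by (intros ->; apply (like_within_center P q _ eps hm) in hq; exact hq).
  destruct (shape_quadrant_in m hne) as [sx [sy hquad]].
  destruct (slab_side Xs Xs_sorted Xs_nonempty (fst q) sx) as [c [gx [hcx [hgx hx]]]].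
  destruct (slab_side Ys Ys_sorted Ys_nonempty (snd q) sy) as [j [gy [hjy [hgy hy]]]].
  set (d := Rmin eps (Rmin gx gy) / 2).
  assert (0 < Rmin eps (Rmin gx gy)) by (repeat apply Rmin_glb_lt; auto; apply hm).
  pose proof (Rmin_l eps (Rmin gx gy)); pose proof (Rmin_r eps (Rmin gx gy)).
  pose proof (Rmin_l gx gy); pose proof (Rmin_r gx gy).
  assert (hF : cell_filled c j = true).
  { apply (cell_status c j (fst q + signed sx d, snd q + signed sy d)); simpl.
    - apply hx; unfold d; lra.
    - apply hy; unfold d; lra.
    - rewrite (like_within_at P q (shape_pred m) eps (signed sx d) (signed sy d) hm)
        by (apply signed_small; unfold d; lra).
      apply shape_quadrantP; auto. unfold d; lra. }
  exists c, j. destruct (cell_filled_range c j hF) as [hc hj].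
  destruct hcx as [_ [[|lx] [|ux]]]; try (unfold K in *; lia).
  destruct hjy as [_ [[|ly] [|uy]]]; try (unfold N in *; lia).
  unfold X, Y; repeat split; auto; lia.
Qed.

Lemma vertex_cells i j m : (i <= K)%nat -> (j <= N)%nat -> locally_like P (X i, Y j) (shape_pred m) ->
  forall sx sy : bool, cell_filled (if sx then S i else i) (if sy then S j else j) = shape_quadrant m sx sy.
Proof.
  intros hi hj [eps hm] sx sy.
  destruct (grid_gap Xs Xs_sorted Xs_nonempty i hi) as [gx [hgx Hx]].
  destruct (grid_gap Ys Ys_sorted Ys_nonempty j hj) as [gy [hgy Hy]].
  set (d := Rmin eps (Rmin gx gy) / 2).
  assert (0 < Rmin eps (Rmin gx gy)) by (repeat apply Rmin_glb_lt; auto; apply hm).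
  pose proof (Rmin_l eps (Rmin gx gy)); pose proof (Rmin_r eps (Rmin gx gy)).
  pose proof (Rmin_l gx gy); pose proof (Rmin_r gx gy).
  destruct (Hx d ltac:(unfold d; lra)) as [ox1 ox2], (Hy d ltac:(unfold d; lra)) as [oy1 oy2].
  apply Bool.eq_iff_eq_true. rewrite <- (shape_quadrantP m sx sy d) by (unfold d; lra).
  rewrite <- (like_within_at P (X i, Y j) (shape_pred m) eps (signed sx d) (signed sy d) hm)
    by (apply signed_small; unfold d; lra).
  symmetry. apply cell_status; simpl; [destruct sx | destruct sy]; simpl; auto.
Qed.

Lemma vertex_shape i j : (i <= K)%nat -> (j <= N)%nat ->
  exists m, locally_like P (X i, Y j) (shape_pred m) /\
    cell_filled i j = shape_quadrant m false false /\ cell_filled (S i) j = shape_quadrant m true false /\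
    cell_filled i (S j) = shape_quadrant m false true /\ cell_filled (S i) (S j) = shape_quadrant m true true.
Proof.
  intros hi hj. destruct (P_modelled (X i, Y j)) as [m hm]. exists m.
  pose proof (vertex_cells i j m hi hj hm) as V.
  repeat split; auto; [apply (V false false) | apply (V true false) | apply (V false true) | apply (V true true)].
Qed.

Lemma no_diag_cells1 i j : ~ (cell_filled i j = true /\ cell_filled (S i) (S j) = true /\
                              cell_filled (S i) j = false /\ cell_filled i (S j) = false).
Proof.
  intros [h1 [h2 [h3 h4]]]. destruct (cell_filled_range _ _ h1), (cell_filled_range _ _ h2).
  destruct (vertex_shape i j) as [m [_ [e1 [e2 [e3 e4]]]]]; try lia.
  rewrite e1, e2, e3, e4 in *. destruct m; try destruct s; try destruct t; discriminate.
Qed.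

Lemma no_diag_cells2 i j : ~ (cell_filled (S i) j = true /\ cell_filled i (S j) = true /\
                              cell_filled i j = false /\ cell_filled (S i) (S j) = false).
Proof.
  intros [h1 [h2 [h3 h4]]]. destruct (cell_filled_range _ _ h1), (cell_filled_range _ _ h2).
  destruct (vertex_shape i j) as [m [_ [e1 [e2 [e3 e4]]]]]; try lia.
  rewrite e1, e2, e3, e4 in *. destruct m; try destruct s; try destruct t; discriminate.
Qed.

Lemma odd_vertex_corner i j : (i <= K)%nat -> (j <= N)%nat ->
  (vertex_count cell_filled i j = 1 \/ vertex_count cell_filled i j = 3)%nat -> corner P (X i, Y j).
Proof.
  intros hi hj. destruct (vertex_shape i j hi hj) as [m [hm [e1 [e2 [e3 e4]]]]].
  unfold vertex_count. rewrite e1, e2, e3, e4.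
  destruct m; try (intros _; apply (corner_of_shape P _ _ hm); do 2 eexists; eauto; fail);
    try destruct s; simpl; intros; exfalso; lia.
Qed.

Lemma cell_filled_out c j : (c = 0 \/ K < c \/ j = 0 \/ N < j)%nat -> cell_filled c j = false.
Proof. intros h. destruct (cell_filled c j) eqn:E; auto. apply cell_filled_range in E. lia. Qed.

Lemma cells_nonempty : exists c j, cell_filled c j = true.
Proof.
  destruct P_nonempty as [q hq].
  destruct (point_in_filled_cell q hq) as [c [j [_ [_ [_ [_ h]]]]]]. eauto.
Qed.

Lemma grid_point_injective i j i' j' : (i <= K)%nat -> (i' <= K)%nat -> (j <= N)%nat -> (j' <= N)%nat ->
  (X i, Y j) = (X i', Y j') -> i = i' /\ j = j'.
Proof.
  intros hi hi' hj hj' e. injection e as ex ey. split.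
  - destruct (lt_eq_lt_dec i i') as [[h|h]|h]; auto; exfalso;
      [assert (X i < X i') by (apply X_lt; lia) | assert (X i' < X i) by (apply X_lt; lia)]; lra.
  - destruct (lt_eq_lt_dec j j') as [[h|h]|h]; auto; exfalso;
      [assert (Y j < Y j') by (apply Y_lt; lia) | assert (Y j' < Y j) by (apply Y_lt; lia)]; lra.
Qed.

Lemma odd_vertices_le_corners :
  (n_convex cell_filled K N + n_reflex cell_filled K N <= length corners)%nat.
Proof.
  set (V := flat_map (fun i => map (fun j => (i, j)) (seq 0 (S N))) (seq 0 (S K))).
  set (odd := fun v : nat * nat =>
                convex_vertex cell_filled (fst v) (snd v) || reflex_vertex cell_filled (fst v) (snd v)).
  assert (E : (n_convex cell_filled K N + n_reflex cell_filled K N = length (filter odd V))%nat).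
  { unfold V. rewrite length_filter_flat_map. unfold n_convex, n_reflex. rewrite <- nsum_add.
    apply nsum_ext. intros i _. rewrite length_filter_map_seq, <- nsum_add. apply nsum_ext. intros j _.
    unfold odd, convex_vertex, reflex_vertex. simpl.
    destruct (Nat.eqb_spec (vertex_count cell_filled i j) 1), (Nat.eqb_spec (vertex_count cell_filled i j) 3);
      simpl; lia. }
  assert (inV : forall v, In v V -> (fst v <= K /\ snd v <= N)%nat).
  { intros v hv. unfold V in hv. apply in_flat_map in hv as [i [hi hv]]. apply in_map_iff in hv as [j [<- hj]].
    apply in_seq in hi, hj. simpl; lia. }
  rewrite E, <- (length_map (fun v : nat * nat => (X (fst v), Y (snd v)))).
  apply NoDup_incl_length.
  - apply NoDup_map_NoDup_ForallPairs.
    + intros [i j] [i' j'] h1%filter_In h2%filter_In e.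
      destruct (inV _ (proj1 h1)), (inV _ (proj1 h2)). simpl in *.
      destruct (grid_point_injective i j i' j'); auto; subst; auto.
    + apply NoDup_filter. unfold V. apply NoDup_flat_map; [apply seq_NoDup| |].
      * intros i _. apply NoDup_map_NoDup_ForallPairs; [|apply seq_NoDup]. intros x y _ _ h; congruence.
      * intros x y z _ _ h1 h2. apply in_map_iff in h1, h2.
        destruct h1 as [? [<- _]], h2 as [? [h _]]; congruence.
  - intros p hp. apply in_map_iff in hp as [[i j] [<- hv%filter_In]]. destruct hv as [hv ho].
    destruct (inV _ hv). apply corners_spec, odd_vertex_corner; auto.
    unfold odd, convex_vertex, reflex_vertex in ho. apply orb_true_iff in ho as [ho|ho];
      apply Nat.eqb_eq in ho; auto.
Qed.

Lemma filled_col0 j : cell_filled 0 j = false.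
Proof. apply cell_filled_out; lia. Qed.
Lemma filled_row0 c : cell_filled c 0 = false.
Proof. apply cell_filled_out; lia. Qed.
Lemma filled_colK c j : (K < c)%nat -> cell_filled c j = false.
Proof. intros; apply cell_filled_out; lia. Qed.
Lemma filled_rowN c j : (N < j)%nat -> cell_filled c j = false.
Proof. intros; apply cell_filled_out; lia. Qed.

Definition cell_pieces : list (nat * nat * nat) := pieces cell_filled K N.

Definition piece_rect (t : nat * nat * nat) : rect :=
  let '(c, a, b) := t in (X (c - 1), X (piece_end cell_filled K c a b), Y a, Y b).

Definition piece_rects : list rect := map piece_rect cell_pieces.

Lemma cell_piece_spec c a b : In (c, a, b) cell_pieces ->
  let e := piece_end cell_filled K c a b in
  (1 <= c <= e)%nat /\ (e <= K)%nat /\ (a < b <= N)%nat /\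
  (forall k, c <= k <= e -> cell_filled k a = false /\ cell_filled k (S b) = false /\
     forall j, a < j <= b -> cell_filled k j = true)%nat.
Proof.
  intros h%(in_pieces _ _ _ filled_col0 filled_colK filled_rowN). simpl.
  destruct (piece_spec _ _ _ filled_col0 filled_colK filled_rowN c a b h) as [h1 [h2 [h3 [h4 _]]]].
  do 3 (split; [lia|]). intros k hk.
  destruct (proj1 (maxrunP _ _ _) (h4 k hk)) as [_ [hin [ha hb]]]. auto.
Qed.

Lemma piece_rects_wf r : In r piece_rects -> rect_wf r.
Proof.
  intros [[[c a] b] [<- h%cell_piece_spec]]%in_map_iff. simpl in *.
  split; [apply X_lt | apply Y_lt]; lia.
Qed.

Lemma piece_rects_cover q : P q <-> exists r, In r piece_rects /\ in_rect r q.
Proof.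
  split.
  - intros (c & j & hc & hj & hx & hy & hF)%point_in_filled_cell.
    destruct (pieces_cover _ _ _ filled_col0 filled_row0 filled_colK filled_rowN c j hF)
      as (c1 & a & b & hin & h1 & h2).
    exists (piece_rect (c1, a, b)). split; [apply in_map; auto|].
    destruct (cell_piece_spec c1 a b hin) as (p1 & p2 & p3 & _). simpl.
    assert (X (c1 - 1) <= X (c - 1)) by (apply X_le; lia).
    assert (X c <= X (piece_end cell_filled K c1 a b)) by (apply X_le; lia).
    assert (Y a <= Y (j - 1)) by (apply Y_le; lia).
    assert (Y j <= Y b) by (apply Y_le; lia).
    repeat split; lra.
  - intros [r [([[c a] b] & <- & hin)%in_map_iff hq]].
    destruct (cell_piece_spec c a b hin) as (p1 & p2 & p3 & p4). simpl in hq. destruct hq as [hx hy].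
    destruct (slab_locate_cc Xs Xs_sorted Xs_nonempty c (piece_end cell_filled K c a b) (fst q))
      as [k [hk hkx]]; auto; try lia.
    destruct (slab_locate_cc Ys Ys_sorted Ys_nonempty (S a) b (snd q)) as [j [hj hjy]];
      [fold N; lia | fold N; lia | replace (S a - 1)%nat with a by lia; exact hy |].
    apply (filled_cell_closure k j q).
    + apply closed_slab_bounds; auto; fold K; lia.
    + apply closed_slab_bounds; auto; fold N; lia.
    + apply p4; lia.
Qed.

Lemma piece_rects_disjoint i j : (i < length piece_rects)%nat -> (j < length piece_rects)%nat -> i <> j ->
  forall q, ~ (in_rect_open (nth i piece_rects (0,0,0,0)) q /\ in_rect_open (nth j piece_rects (0,0,0,0)) q).
Proof.
  unfold piece_rects. rewrite length_map. intros hi hj hij q [h1 h2].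
  rewrite (nth_indep _ _ (piece_rect (0,0,0)%nat)), map_nth in h1 by (rewrite length_map; auto).
  rewrite (nth_indep _ _ (piece_rect (0,0,0)%nat)), map_nth in h2 by (rewrite length_map; auto).
  pose proof (nth_In cell_pieces (0,0,0)%nat hi) as hin1. pose proof (nth_In cell_pieces (0,0,0)%nat hj) as hin2.
  destruct (nth i cell_pieces (0,0,0)%nat) as [[c a] b] eqn:E1.
  destruct (nth j cell_pieces (0,0,0)%nat) as [[c' a'] b'] eqn:E2.
  destruct (cell_piece_spec c a b hin1) as (p1 & p2 & p3 & _).
  destruct (cell_piece_spec c' a' b' hin2) as (q1 & q2 & q3 & _).
  simpl in h1, h2. destruct h1 as [hx1 hy1], h2 as [hx2 hy2].
  destruct (slab_locate_co Xs c (piece_end cell_filled K c a b) (fst q))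
    as [k [hk hkx]]; [lia | fold K; lia | fold X; lra |].
  destruct (slab_locate_co Xs c' (piece_end cell_filled K c' a' b') (fst q))
    as [k' [hk' hkx']]; [lia | fold K; lia | fold X; lra |].
  destruct (slab_locate_co Ys (S a) b (snd q)) as [r [hr hry]];
    [lia | fold N; lia | replace (S a - 1)%nat with a by lia; fold Y; lra |].
  destruct (slab_locate_co Ys (S a') b' (snd q)) as [r' [hr' hry']];
    [lia | fold N; lia | replace (S a' - 1)%nat with a' by lia; fold Y; lra |].
  assert (k = k') as <- by (apply (slab_index_unique Xs Xs_sorted Xs_nonempty k k' (fst q)); auto; fold K; lia).
  assert (r = r') as <- by (apply (slab_index_unique Ys Ys_sorted Ys_nonempty r r' (snd q)); auto; fold N; lia).
  pose proof (piece_unique _ _ _ filled_col0 filled_row0 filled_colK filled_rowN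
                c a b c' a' b' k r hin1 hin2 ltac:(lia) ltac:(lia) ltac:(lia) ltac:(lia)) as e.
  rewrite <- E1, <- E2 in e. apply hij. eapply NoDup_nth; eauto. apply NoDup_pieces.
Qed.

Lemma piece_rects_sides r : In r piece_rects ->
  let '(a, b, c, d) := r in
  forall x, a <= x <= b -> boundary_pt P (x, c) /\ boundary_pt P (x, d).
Proof.
  intros ([[c a] b] & <- & hin)%in_map_iff. destruct (cell_piece_spec c a b hin) as (p1 & p2 & p3 & p4).
  simpl. intros x hx.
  destruct (slab_locate_cc Xs Xs_sorted Xs_nonempty c (piece_end cell_filled K c a b) x)
    as [k [hk hkx]]; auto; try lia.
  assert (hxk : closed_slab Xs k x) by (apply closed_slab_bounds; auto; fold K; lia).
  destruct (p4 k hk) as (below & above & inside).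
  destruct (closed_slab_grid Ys Ys_sorted Ys_nonempty a) as [ya ya']; [fold N; lia|].
  destruct (closed_slab_grid Ys Ys_sorted Ys_nonempty b) as [yb yb']; [fold N; lia|].
  split; split.
  - apply (filled_cell_closure k (S a)); auto. apply inside; lia.
  - apply (empty_cell_closure k a); auto.
  - apply (filled_cell_closure k b); auto. apply inside; lia.
  - apply (empty_cell_closure k (S b)); auto.
Qed.

Lemma piece_rects_count : (4 * length piece_rects + 8 <= 3 * length corners)%nat.
Proof.
  unfold piece_rects. rewrite length_map.
  pose proof (pieces_bound cell_filled K N filled_col0 filled_row0 filled_colK filled_rowN
                no_diag_cells1 no_diag_cells2 cells_nonempty).
  pose proof odd_vertices_le_corners. unfold cell_pieces. lia.
Qed.

Lemma grid_corner_coords i j : (i <= K)%nat -> (j <= N)%nat ->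
  (exists p, corner P p /\ fst p = X i) /\ (exists p, corner P p /\ snd p = Y j).
Proof.
  intros hi hj.
  assert (hx : In (X i) Xs) by (apply (In_grid Xs Xs_sorted Xs_nonempty); eauto).
  assert (hy : In (Y j) Ys) by (apply (In_grid Ys Ys_sorted Ys_nonempty); eauto).
  unfold Xs, Ys in hx, hy. rewrite in_sort_dedup, in_map_iff in hx, hy.
  destruct hx as [p [ep hp]], hy as [p' [ep' hp']].
  split; [exists p | exists p']; split; auto; apply corners_spec; auto.
Qed.

Lemma piece_rects_polyomino : polyomino P -> forall r, In r piece_rects -> polyomino (in_rect r).
Proof.
  intros hpoly r hr. pose proof (piece_rects_wf r hr) as hwf.
  apply in_map_iff in hr as [[[c a] b] [<- hin]].
  destruct (cell_piece_spec c a b hin) as (p1 & p2 & p3 & _).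
  destruct (grid_corner_coords (c - 1) a) as [[p [hp e1]] [p' [hp' e3]]]; try lia.
  destruct (grid_corner_coords (piece_end cell_filled K c a b) b) as [[u [hu e2]] [u' [hu' e4]]]; try lia.
  destruct (polyomino_corner_integral P p hpoly hp) as [[z1 h1] _].
  destruct (polyomino_corner_integral P u hpoly hu) as [[z2 h2] _].
  destruct (polyomino_corner_integral P p' hpoly hp') as [_ [z3 h3]].
  destruct (polyomino_corner_integral P u' hpoly hu') as [_ [z4 h4]].
  simpl in hwf |- *. rewrite <- e1, <- e2, <- e3, <- e4, h1, h2, h3, h4 in *.
  destruct hwf as [w1%lt_IZR w2%lt_IZR]. apply integral_rect_polyomino; auto.
Qed.

End PolygonGrid.

Lemma orthogonal_polygon_modelled P : orthogonal_polygon P -> locally_modelled P.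
Proof.
  intros [_ [_ [H _]]] p.
  destruct (H p) as [h|[h|[[s h]|[[s h]|[[s [t h]]|[s [t h]]]]]]];
    [exists ShFull | exists ShEmpty | exists (ShHalfX s) | exists (ShHalfY s)
    | exists (ShQuadrant s t) | exists (ShThreeQuad s t)]; exact h.
Qed.

Lemma piece_bound_real (k n : nat) : (4 * k + 8 <= 3 * n)%nat -> INR k <= 3 / 4 * INR n - 2.
Proof.
  intro h. apply le_INR in h. rewrite plus_INR, !mult_INR in h. simpl in h. lra.
Qed.

Theorem corollary1 (P : point -> Prop) (n : nat) :
  orthogonal_polygon P -> num_corners P n ->
  exists rs : list rect,
    vertical_rect_partition P rs /\
    INR (length rs) <= 3 / 4 * INR n - 2 /\
    (polyomino P -> forall r, In r rs -> polyomino (in_rect r)).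
Proof.
  intros hpoly [corners [_ [Hcorners <-]]].
  pose proof (orthogonal_polygon_modelled P hpoly) as Hmod.
  destruct hpoly as [Hne [[Mb Hbd] _]].
  exists (piece_rects P corners). split; [|split].
  - split; [|split; [|split]].
    + apply (piece_rects_wf P Hmod Mb Hbd Hne corners Hcorners).
    + apply (piece_rects_cover P Hmod Mb Hbd Hne corners Hcorners).
    + apply (piece_rects_disjoint P Hmod Mb Hbd Hne corners Hcorners).
    + apply (piece_rects_sides P Hmod Mb Hbd Hne corners Hcorners).
  - apply piece_bound_real, (piece_rects_count P Hmod Mb Hbd Hne corners Hcorners).
  - apply (piece_rects_polyomino P Hmod Mb Hbd Hne corners Hcorners).
Qed.
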